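(* Let $T$ be an $L$-theory extending $I\Sigma_1$ such that for some $K\in\mathbb{N}$ and some $\varepsilon>0$, $T$ proves: for all pairwise coprime $a,b,c$ with $a+b=c$, $c < K\,\mathrm{rad}(abc)^{1+\varepsilon}$; and $T$ proves Fermat's Last Theorem for the definable exponential $x^y$ (no $a,b,c\neq 0$ and $n>2$ with $a^n+b^n=c^n$). Then $T + \mathrm{Exp}' + (\mathrm{e5}') + (\mathrm{e8})$ proves Fermat's Last Theorem for $e$: there are no non-zero $x,y,z\in B$ and $n\in A$ with $n>2$ such that $e(x,n)+e(y,n)=e(z,n)$.
   Context: $L = \langle 0,1,+,\cdot,\le\rangle$, $L^e = \langle 0,1,+,\cdot,e,\le\rangle$ with $e$ a binary (possibly partial) function symbol. $x^y$ is the exponential $\Delta_1$-definable in $I\Sigma_1$; $\mathrm{rad}(a)$ is the product of the distinct primes dividing $a$. Presburger arithmetic $\mathrm{Pr}$: $0 \ne z+1$; $x\neq 0 \to \exists z\,(x = z+1)$; $x+z=y+z\to x=y$; $x+0=x$; associativity and commutativity of $+$; $x\le y \leftrightarrow \exists z\,(x+z=y)$; for each standard $0<n$, $\exists y\,(ny \le x < n(y+1))$. $\mathrm{Exp}'$ consists of: (e0) there is an $L$-substructure $\mathcal{A}$ of $\mathcal{B}$ (universe $A$) satisfying $\mathrm{Pr}$ with $e: B\times A\to B$; and for all $x\in B$, $y,z\in A$: (e1) $(x=1\vee y=0)\leftrightarrow e(x,y)=1$; (e2) $x\neq0\to e(x,y)\ne0$; (e3) $e(x,1)=x$; (e4) $e(x,y+z)=e(x,y)e(x,z)$.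 Further axioms: (e5') $e(xy,z)=e(x,z)\cdot e(y,z)$ for $x,y\in B$, $z\in A$; (e8) for all $x,y\in B$ and $a,b\in A$: if $x$ and $y$ are coprime, then $e(x,a)$ and $e(y,b)$ are coprime. *)

(* first-order syntax for L = <0,1,+,.,<=>, semantics, IΣ1,
   and the semantic content of the axioms of Exp', (e5'), (e8).
   "T proves phi" is rendered semantically (every model of T satisfies phi),
   which is equivalent by Goedel's completeness theorem. *)
From Stdlib Require Import Arith.

Inductive term : Type :=
| Tvar : nat -> term
| Tzero : term
| Tone : term
| Tadd : term -> term -> term
| Tmul : term -> term -> term.

Inductive form : Type :=
| Feq : term -> term -> form
| Fle : term -> term -> form
| Ffalse : form
| Fnot : form -> form
| Fand : form -> form -> form
| For : form -> form -> form
| Fimp : form -> form -> form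
| Fall : nat -> form -> form
| Fex : nat -> form -> form.

Fixpoint occurs (v : nat) (t : term) : bool :=
  match t with
  | Tvar w => Nat.eqb v w
  | Tzero | Tone => false
  | Tadd s u | Tmul s u => occurs v s || occurs v u
  end.

Inductive Delta0 : form -> Prop :=
| D0_eq s t : Delta0 (Feq s t)
| D0_le s t : Delta0 (Fle s t)
| D0_false : Delta0 Ffalse
| D0_not f : Delta0 f -> Delta0 (Fnot f)
| D0_and f g : Delta0 f -> Delta0 g -> Delta0 (Fand f g)
| D0_or f g : Delta0 f -> Delta0 g -> Delta0 (For f g)
| D0_imp f g : Delta0 f -> Delta0 g -> Delta0 (Fimp f g)
| D0_ball v t f : occurs v t = false -> Delta0 f ->
    Delta0 (Fall v (Fimp (Fle (Tvar v) t) f))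
| D0_bex v t f : occurs v t = false -> Delta0 f ->
    Delta0 (Fex v (Fand (Fle (Tvar v) t) f)).

Inductive Sigma1 : form -> Prop :=
| S1_d0 f : Delta0 f -> Sigma1 f
| S1_ex v f : Sigma1 f -> Sigma1 (Fex v f).

(* An L-theory: a set of L-formulas (read as their universal closures). *)
Definition theory := form -> Prop.

Record LStr : Type := {
  car :> Type;
  s0 : car;
  s1 : car;
  sadd : car -> car -> car;
  smul : car -> car -> car;
  sle : car -> car -> Prop }.

Arguments s0 {_}. Arguments s1 {_}. Arguments sadd {_} _ _.
Arguments smul {_} _ _. Arguments sle {_} _ _.

Definition upd {M : LStr} (rho : nat -> M) (v : nat) (a : M) : nat -> M :=
  fun w => if Nat.eqb w v then a else rho w.

Fixpoint evalt {M : LStr} (rho : nat -> M) (t : term) : M :=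
  match t with
  | Tvar v => rho v
  | Tzero => s0
  | Tone => s1
  | Tadd s u => sadd (evalt rho s) (evalt rho u)
  | Tmul s u => smul (evalt rho s) (evalt rho u)
  end.

Fixpoint sat {M : LStr} (rho : nat -> M) (f : form) : Prop :=
  match f with
  | Feq s t => evalt rho s = evalt rho t
  | Fle s t => sle (evalt rho s) (evalt rho t)
  | Ffalse => False
  | Fnot g => ~ sat rho g
  | Fand g h => sat rho g /\ sat rho h
  | For g h => sat rho g \/ sat rho h
  | Fimp g h => sat rho g -> sat rho h
  | Fall v g => forall a : M, sat (upd rho v a) g
  | Fex v g => exists a : M, sat (upd rho v a) g
  end.

Definition ModelOf (T : theory) (M : LStr) : Prop :=
  forall f, T f -> forall rho : nat -> M, sat rho f.

Definition BasicAx (M : LStr) : Prop :=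
  (forall x : M, sadd x s1 <> s0) /\
  (forall x y : M, sadd x s1 = sadd y s1 -> x = y) /\
  (forall x : M, x <> s0 -> exists y, x = sadd y s1) /\
  (forall x : M, sadd x s0 = x) /\
  (forall x y : M, sadd x (sadd y s1) = sadd (sadd x y) s1) /\
  (forall x : M, smul x s0 = s0) /\
  (forall x y : M, smul x (sadd y s1) = sadd (smul x y) x) /\
  (forall x y : M, sle x y <-> exists z, sadd z x = y).

Definition Sigma1Ind (M : LStr) : Prop :=
  forall (f : form) (v : nat) (rho : nat -> M), Sigma1 f ->
    sat (upd rho v s0) f ->
    (forall a : M, sat (upd rho v a) f -> sat (upd rho v (sadd a s1)) f) ->
    forall a : M, sat (upd rho v a) f.

Definition ModelISigma1 (M : LStr) : Prop := BasicAx M /\ Sigma1Ind M.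

Fixpoint num {M : LStr} (n : nat) : M :=
  match n with O => s0 | S k => sadd (num k) s1 end.

Definition slt {M : LStr} (x y : M) : Prop := sle x y /\ x <> y.
Definition sdvd {M : LStr} (d a : M) : Prop := exists k, a = smul d k.
Definition sprime {M : LStr} (p : M) : Prop :=
  slt s1 p /\ forall d, sdvd d p -> d = s1 \/ d = p.
Definition scoprime {M : LStr} (x y : M) : Prop :=
  forall d, sdvd d x -> sdvd d y -> d = s1.
Definition ssquarefree {M : LStr} (r : M) : Prop :=
  forall d, sdvd (smul d d) r -> d = s1.
(* r = rad(a): r is the squarefree divisor of a divisible by every prime
   divisor of a (i.e. the product of the distinct primes dividing a) *)
Definition IsRad {M : LStr} (a r : M) : Prop :=
  sdvd r a /\ ssquarefree r /\ forall p, sprime p -> sdvd p a -> sdvd p r.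

(* x^y, the exponential Delta_1-definable in I Sigma_1: in a model of
   I Sigma_1 it is the unique function satisfying the recursion equations
   whose graph is (parameter-free) Sigma_1-definable. *)
Definition Sigma1Graph {M : LStr} (f : M -> M -> M) : Prop :=
  exists phi, Sigma1 phi /\
    forall rho : nat -> M, sat rho phi <-> f (rho 0) (rho 1) = rho 2.

Definition IsDefExp {M : LStr} (ex : M -> M -> M) : Prop :=
  (forall x, ex x s0 = s1) /\
  (forall x y, ex x (sadd y s1) = smul (ex x y) x) /\
  Sigma1Graph ex.

(* ABC with constant K and epsilon = p/q:
   c < K rad(abc)^(1+p/q)  written as  c^q < K^q * rad(abc)^(q+p). *)
Definition ABC_in {M : LStr} (ex : M -> M -> M) (K p q : nat) : Prop :=
  forall a b c : M, a <> s0 -> b <> s0 ->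
    scoprime a b -> scoprime a c -> scoprime b c ->
    sadd a b = c ->
    forall r, IsRad (smul (smul a b) c) r ->
      slt (ex c (num q)) (smul (ex (num K) (num q)) (ex r (num (q + p)))).

Definition FLT_exp {M : LStr} (ex : M -> M -> M) : Prop :=
  ~ exists a b c n : M, a <> s0 /\ b <> s0 /\ c <> s0 /\ slt (num 2) n /\
      sadd (ex a n) (ex b n) = ex c n.

Fixpoint nmul {M : LStr} (n : nat) (y : M) : M :=
  match n with O => s0 | S k => sadd (nmul k y) y end.

Definition SubPr {M : LStr} (A : M -> Prop) : Prop :=
  A s0 /\ A s1 /\ (forall x y, A x -> A y -> A (sadd x y)) /\
  (forall x y, A x -> A y -> A (smul x y)) /\
  (forall z, A z -> s0 <> sadd z s1) /\
  (forall x, A x -> x <> s0 -> exists z, A z /\ x = sadd z s1) /\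
  (forall x y z, A x -> A y -> A z -> sadd x z = sadd y z -> x = y) /\
  (forall x, A x -> sadd x s0 = x) /\
  (forall x y z, A x -> A y -> A z -> sadd x (sadd y z) = sadd (sadd x y) z) /\
  (forall x y, A x -> A y -> sadd x y = sadd y x) /\
  (forall x y, A x -> A y -> (sle x y <-> exists z, A z /\ sadd x z = y)) /\
  (forall n : nat, 0 < n -> forall x, A x ->
     exists y, A y /\ sle (nmul n y) x /\ slt x (nmul n (sadd y s1))).

(* e : B x A -> B is modelled as e : B -> B -> B of which only the values
   with second argument in A matter. *)
Definition ExpPrime {M : LStr} (A : M -> Prop) (e : M -> M -> M) : Prop :=
  SubPr A /\
  (forall x y, A y -> ((x = s1 \/ y = s0) <-> e x y = s1)) /\
  (forall x y, A y -> x <> s0 -> e x y <> s0) /\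
  (forall x, e x s1 = x) /\
  (forall x y z, A y -> A z -> e x (sadd y z) = smul (e x y) (e x z)).

Definition E5' {M : LStr} (A : M -> Prop) (e : M -> M -> M) : Prop :=
  forall x y z, A z -> e (smul x y) z = smul (e x z) (e y z).

Definition E8 {M : LStr} (A : M -> Prop) (e : M -> M -> M) : Prop :=
  forall x y a b, A a -> A b -> scoprime x y -> scoprime (e x a) (e y b).

Definition FLT_e {M : LStr} (A : M -> Prop) (e : M -> M -> M) : Prop :=
  ~ exists x y z n : M, x <> s0 /\ y <> s0 /\ z <> s0 /\ A n /\
      slt (num 2) n /\ sadd (e x n) (e y n) = e z n.

From Stdlib Require Import Arith Lia Classical ClassicalEpsilon Setoid Ring.

(* Inside a model of IΣ1 we build the definable exponential [dexp] (via Gödel's β-function)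
   and compare it with [e].  Given a counterexample [e x n + e y n = e z n], first divide out
   [gcd x y] to make [x, y, z] pairwise coprime; by (e8) so are [a = e x n], [b = e y n],
   [c = e z n], and every prime dividing [e x n] divides [x], so [rad (abc) <= xyz =: w].
   If [n <= N := 3K + 3 + 3p] is standard, [e] agrees with [dexp] at [n] and FLT for
   [dexp] applies.  Otherwise [n = N + k] with [k ∈ A], so [w^N <= abc <= c^3], while ABC
   gives [c^q < K^q w^(q+p)]; cubing, [w^(Nq) <= c^(3q) < w^(3Kq + 3q + 3p) <= w^(Nq)]. *)

(* Abbreviations for the Δ0 formulas used in the reflection steps; the trailing arguments
   are the indices of their bound variables. *)
Notation fall_le v t g := (Fall v (Fimp (Fle (Tvar v) t) g)).
Notation fex_le v t g := (Fex v (Fand (Fle (Tvar v) t) g)).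
Notation fdvd e a w := (fex_le w a (Feq a (Tmul e (Tvar w)))).
Notation fcoprime a b e w :=
  (fall_le e a (Fimp (fdvd (Tvar e) a w) (Fimp (fdvd (Tvar e) b w) (Feq (Tvar e) Tone)))).
Notation frem a m r q :=
  (Fand (fex_le q a (Feq a (Tadd (Tmul (Tvar q) m) r))) (Fle (Tadd r Tone) m)).
Notation tbeta_mod d i := (Tadd (Tmul (Tadd i Tone) d) Tone).
Notation fexp_code X Y C D Iv Qv Rv :=
  (Fand (Fnot (Feq (Tvar D) Tzero)) (Fand (frem (Tvar C) (tbeta_mod (Tvar D) Tzero) Tone Qv)
    (fall_le Iv (Tvar Y) (Fimp (Fle (Tadd (Tvar Iv) Tone) (Tvar Y))
      (fex_le Rv (Tvar C) (Fand (frem (Tvar C) (tbeta_mod (Tvar D) (Tvar Iv)) (Tvar Rv) Qv)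
         (frem (Tvar C) (tbeta_mod (Tvar D) (Tadd (Tvar Iv) Tone))
               (Tmul (Tvar Rv) (Tvar X)) Qv))))))).

Fixpoint term_bound (t : term) : nat :=
  match t with Tvar v => S v | Tzero | Tone => 0
  | Tadd s u | Tmul s u => Nat.max (term_bound s) (term_bound u) end.

Fixpoint form_bound (f : form) : nat :=
  match f with
  | Feq s t | Fle s t => Nat.max (term_bound s) (term_bound t)
  | Ffalse => 0
  | Fnot g => form_bound g
  | Fand g h | For g h | Fimp g h => Nat.max (form_bound g) (form_bound h)
  | Fall v g | Fex v g => Nat.max (S v) (form_bound g) end.

Lemma evalt_ext (M : LStr) (rho rho' : nat -> M) t :
  (forall w, w < term_bound t -> rho w = rho' w) -> evalt rho t = evalt rho' t.
Proof.
  induction t; cbn; intros H; try reflexivity.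
  all: try (apply H; lia).
  all: rewrite IHt1, IHt2; [reflexivity| |]; intros; apply H; lia.
Qed.

Lemma sat_ext (M : LStr) f : forall (rho rho' : nat -> M),
  (forall w, w < form_bound f -> rho w = rho' w) -> (sat rho f <-> sat rho' f).
Proof.
  induction f; cbn [sat]; intros rho rho' H; cbn [form_bound] in H.
  - rewrite (evalt_ext M rho rho' t), (evalt_ext M rho rho' t0); try tauto; intros; apply H; lia.
  - rewrite (evalt_ext M rho rho' t), (evalt_ext M rho rho' t0); try tauto; intros; apply H; lia.
  - tauto.
  - rewrite (IHf rho rho'); tauto.
  - rewrite (IHf1 rho rho'), (IHf2 rho rho'); try tauto; intros; apply H; lia.
  - rewrite (IHf1 rho rho'), (IHf2 rho rho'); try tauto; intros; apply H; lia.
  - rewrite (IHf1 rho rho'), (IHf2 rho rho'); try tauto; intros; apply H; lia.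
  - assert (Hu : forall a w, w < form_bound f -> upd rho n a w = upd rho' n a w).
    { intros a w Hw; unfold upd; destruct (Nat.eqb w n); auto; apply H; lia. }
    split; intros H' a; specialize (H' a); rewrite (IHf _ _ (Hu a)) in *; auto.
  - assert (Hu : forall a w, w < form_bound f -> upd rho n a w = upd rho' n a w).
    { intros a w Hw; unfold upd; destruct (Nat.eqb w n); auto; apply H; lia. }
    split; intros [a H']; exists a; rewrite (IHf _ _ (Hu a)) in *; auto.
Qed.

Lemma upd_same (M : LStr) (rho : nat -> M) v a : upd rho v a v = a.
Proof. unfold upd. rewrite Nat.eqb_refl. auto. Qed.

Lemma upd_diff (M : LStr) (rho : nat -> M) v w a : w <> v -> upd rho v a w = rho w.
Proof. intros H. unfold upd. apply Nat.eqb_neq in H. rewrite H. auto. Qed.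

Ltac prove_delta0 := repeat (constructor || reflexivity).
Ltac prove_sigma1 := repeat apply S1_ex; apply S1_d0; prove_delta0.

Section Model.
Variable M : LStr.
Hypothesis HB : BasicAx M.
Hypothesis HI : Sigma1Ind M.

Local Infix "⊕" := (@sadd M) (at level 50, left associativity).
Local Infix "⊗" := (@smul M) (at level 40, left associativity).
Local Notation "'Z'" := (@s0 M).
Local Notation "'I'" := (@s1 M).
Local Infix "≼" := (@sle M) (at level 70).
Local Infix "≺" := (@slt M) (at level 70).
Implicit Types a b c d p r x y z : M.

(** * Arithmetic in a model of IΣ1 *)

Lemma succ_neq0 (x : M) : x ⊕ I <> Z. Proof. apply HB. Qed.
Lemma succ_inj (x y : M) : x ⊕ I = y ⊕ I -> x = y. Proof. apply HB. Qed.
Lemma nonzero_succ (x : M) : x <> Z -> exists y, x = y ⊕ I. Proof. apply HB. Qed.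
Lemma add_0_r (x : M) : x ⊕ Z = x. Proof. apply HB. Qed.
Lemma add_succ_r (x y : M) : x ⊕ (y ⊕ I) = (x ⊕ y) ⊕ I. Proof. apply HB. Qed.
Lemma mul_0_r (x : M) : x ⊗ Z = Z. Proof. apply HB. Qed.
Lemma mul_succ_r (x y : M) : x ⊗ (y ⊕ I) = x ⊗ y ⊕ x. Proof. apply HB. Qed.
Lemma le_iff_add (x y : M) : x ≼ y <-> exists z, z ⊕ x = y. Proof. apply HB. Qed.

Lemma sigma1_ind f v rho (P : M -> Prop) : Sigma1 f ->
  (forall a, sat (upd rho v a) f <-> P a) -> P Z -> (forall a, P a -> P (a ⊕ I)) ->
  forall a, P a.
Proof.
  intros Hs He H0 HS a. apply He. apply HI; auto. apply He; auto.
  intros b Hb; apply He, HS, He, Hb.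
Qed.

(* Variable 0 of [f] is the induction variable, [rho] supplies the parameters; [f] must
   evaluate under [cbn] to the goal's predicate itself, which is why the predicates proved by
   induction below are phrased exactly as formulas read. *)
Ltac sigma1_induction f rho :=
  let a := fresh "a" in
  match goal with
  | |- forall z, @?P z =>
      apply (sigma1_ind f 0 rho P); [prove_sigma1 | intro a; cbn; reflexivity | | ]
  end.

Lemma add_0_l (x : M) : Z ⊕ x = x.
Proof.
  revert x. sigma1_induction (Feq (Tadd Tzero (Tvar 0)) (Tvar 0)) (fun _ : nat => Z).
  - apply add_0_r.
  - intros a H. rewrite add_succ_r, H. reflexivity.
Qed.

Lemma add_succ_l (x y : M) : (x ⊕ I) ⊕ y = (x ⊕ y) ⊕ I.
Proof.
  revert y.
  sigma1_induction (Feq (Tadd (Tadd (Tvar 1) Tone) (Tvar 0)) (Tadd (Tadd (Tvar 1) (Tvar 0)) Tone))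
    (fun _ : nat => x).
  - rewrite !add_0_r; reflexivity.
  - intros a H. rewrite !add_succ_r, H. reflexivity.
Qed.

Lemma add_comm (x y : M) : x ⊕ y = y ⊕ x.
Proof.
  revert y.
  sigma1_induction (Feq (Tadd (Tvar 1) (Tvar 0)) (Tadd (Tvar 0) (Tvar 1))) (fun _ : nat => x).
  - rewrite add_0_r, add_0_l; reflexivity.
  - intros a H. rewrite add_succ_r, H, add_succ_l. reflexivity.
Qed.

Lemma add_assoc (x y z : M) : (x ⊕ y) ⊕ z = x ⊕ (y ⊕ z).
Proof.
  revert z.
  sigma1_induction
    (Feq (Tadd (Tadd (Tvar 1) (Tvar 2)) (Tvar 0)) (Tadd (Tvar 1) (Tadd (Tvar 2) (Tvar 0))))
    (fun i : nat => match i with 1 => x | _ => y end).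
  - rewrite !add_0_r; reflexivity.
  - intros a H. rewrite !add_succ_r, H. reflexivity.
Qed.

Lemma mul_add_distr_l (x y z : M) : x ⊗ (y ⊕ z) = x ⊗ y ⊕ x ⊗ z.
Proof.
  revert z.
  sigma1_induction
    (Feq (Tmul (Tvar 1) (Tadd (Tvar 2) (Tvar 0)))
         (Tadd (Tmul (Tvar 1) (Tvar 2)) (Tmul (Tvar 1) (Tvar 0))))
    (fun i : nat => match i with 1 => x | _ => y end).
  - rewrite add_0_r, mul_0_r, add_0_r; reflexivity.
  - intros a H. rewrite add_succ_r, !mul_succ_r, H, add_assoc. reflexivity.
Qed.

Lemma mul_0_l (x : M) : Z ⊗ x = Z.
Proof.
  revert x. sigma1_induction (Feq (Tmul Tzero (Tvar 0)) Tzero) (fun _ : nat => Z).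
  - apply mul_0_r.
  - intros a H. rewrite mul_succ_r, H, add_0_r. reflexivity.
Qed.

Lemma mul_succ_l (x y : M) : (x ⊕ I) ⊗ y = x ⊗ y ⊕ y.
Proof.
  revert y.
  sigma1_induction
    (Feq (Tmul (Tadd (Tvar 1) Tone) (Tvar 0)) (Tadd (Tmul (Tvar 1) (Tvar 0)) (Tvar 0)))
    (fun _ : nat => x).
  - rewrite !mul_0_r, add_0_r; reflexivity.
  - intros a H. rewrite !mul_succ_r, H, !add_assoc. f_equal.
    rewrite !add_succ_r, (add_comm a x). reflexivity.
Qed.

Lemma mul_comm (x y : M) : x ⊗ y = y ⊗ x.
Proof.
  revert y.
  sigma1_induction (Feq (Tmul (Tvar 1) (Tvar 0)) (Tmul (Tvar 0) (Tvar 1))) (fun _ : nat => x).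
  - rewrite mul_0_r, mul_0_l; reflexivity.
  - intros a H. rewrite mul_succ_r, H, mul_succ_l. reflexivity.
Qed.

Lemma mul_assoc (x y z : M) : (x ⊗ y) ⊗ z = x ⊗ (y ⊗ z).
Proof.
  revert z.
  sigma1_induction
    (Feq (Tmul (Tmul (Tvar 1) (Tvar 2)) (Tvar 0)) (Tmul (Tvar 1) (Tmul (Tvar 2) (Tvar 0))))
    (fun i : nat => match i with 1 => x | _ => y end).
  - rewrite !mul_0_r; reflexivity.
  - intros a H. rewrite !mul_succ_r, H, mul_add_distr_l. reflexivity.
Qed.

Lemma mul_1_l (x : M) : I ⊗ x = x.
Proof. rewrite mul_comm, <- (add_0_l I), mul_succ_r, mul_0_r, add_0_l. reflexivity. Qed.

Lemma model_semiring : semi_ring_theory (R := M) Z I sadd smul eq.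
Proof.
  constructor; intros.
  - apply add_0_l.
  - apply add_comm.
  - symmetry; apply add_assoc.
  - apply mul_1_l.
  - apply mul_0_l.
  - apply mul_comm.
  - symmetry; apply mul_assoc.
  - rewrite mul_comm, mul_add_distr_l, !(mul_comm p). reflexivity.
Qed.

Add Ring model_ring : model_semiring.

Lemma add_cancel_r (x y z : M) : x ⊕ z = y ⊕ z -> x = y.
Proof.
  revert z.
  sigma1_induction
    (Fimp (Feq (Tadd (Tvar 1) (Tvar 0)) (Tadd (Tvar 2) (Tvar 0))) (Feq (Tvar 1) (Tvar 2)))
    (fun i : nat => match i with 1 => x | _ => y end).
  - rewrite !add_0_r; auto.
  - intros a H E. rewrite !add_succ_r in E. apply succ_inj in E. auto.
Qed.

Lemma add_cancel_l (x y z : M) : z ⊕ x = z ⊕ y -> x = y.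
Proof. rewrite !(add_comm z). apply add_cancel_r. Qed.

Lemma add_eq_0 (x y : M) : x ⊕ y = Z -> x = Z /\ y = Z.
Proof.
  intros E. destruct (classic (y = Z)) as [Hy|Hy].
  - subst. rewrite add_0_r in E. auto.
  - destruct (nonzero_succ y Hy) as [y' ->]. rewrite add_succ_r in E.
    exfalso; eapply succ_neq0; eauto.
Qed.

Lemma add_eq_self (x y : M) : x ⊕ y = x -> y = Z.
Proof. intros E. apply (add_cancel_l _ _ x). rewrite add_0_r. auto. Qed.

Lemma mul_eq_0 (x y : M) : x ⊗ y = Z -> x = Z \/ y = Z.
Proof.
  intros E. destruct (classic (y = Z)) as [|Hy]; auto. destruct (nonzero_succ _ Hy) as [c ->].
  rewrite mul_succ_r in E. apply add_eq_0 in E. tauto.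
Qed.

Lemma mul_neq0 (x y : M) : x <> Z -> y <> Z -> x ⊗ y <> Z.
Proof. intros Hx Hy E. apply mul_eq_0 in E as [|]; auto. Qed.

Lemma one_neq0 : (I : M) <> Z.
Proof. rewrite <- (add_0_l I). apply succ_neq0. Qed.
Lemma le_refl (x : M) : x ≼ x.
Proof. apply le_iff_add. exists Z. apply add_0_l. Qed.

Lemma le_trans (x y z : M) : x ≼ y -> y ≼ z -> x ≼ z.
Proof.
  rewrite !le_iff_add. intros [a Ha] [b Hb]. exists (b ⊕ a). subst. ring.
Qed.

Lemma le_antisymm (x y : M) : x ≼ y -> y ≼ x -> x = y.
Proof.
  rewrite !le_iff_add. intros [a Ha] [b Hb]. subst.
  assert (E : (b ⊕ a) ⊕ x = Z ⊕ x)
    by (transitivity (b ⊕ (a ⊕ x)); [ring | rewrite Hb; ring]).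
  apply add_cancel_r in E. apply add_eq_0 in E as [-> ->]. ring.
Qed.

Lemma le_0_l (x : M) : Z ≼ x.
Proof. apply le_iff_add. exists x. apply add_0_r. Qed.

Lemma le_add_l (x y : M) : x ≼ y ⊕ x.
Proof. apply le_iff_add. eauto. Qed.

Lemma le_add_r (x y : M) : x ≼ x ⊕ y.
Proof. rewrite add_comm. apply le_add_l. Qed.

Lemma le_0_r (x : M) : x ≼ Z -> x = Z.
Proof. rewrite le_iff_add. intros [a Ha]. apply add_eq_0 in Ha. tauto. Qed.

Lemma le_total (x y : M) : x ≼ y \/ y ≼ x.
Proof.
  revert y.
  sigma1_induction (For (Fle (Tvar 1) (Tvar 0)) (Fle (Tvar 0) (Tvar 1))) (fun _ : nat => x).
  - right. apply le_0_l.
  - intros a [H|H].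
    + left. eapply le_trans; [exact H|]. apply le_add_r.
    + apply le_iff_add in H as [b Hb]. destruct (classic (b = Z)) as [->|Hz].
      * left. rewrite add_0_l in Hb. subst. apply le_add_r.
      * destruct (nonzero_succ _ Hz) as [c ->]. right. apply le_iff_add. exists c.
        rewrite <- Hb. ring.
Qed.

Lemma le_succ_r (x y : M) : x ≼ y ⊕ I -> x ≼ y \/ x = y ⊕ I.
Proof.
  rewrite le_iff_add. intros [z Hz]. destruct (classic (z = Z)) as [->|Hz0].
  - right. rewrite <- Hz. ring.
  - destruct (nonzero_succ _ Hz0) as [c ->]. left. apply le_iff_add. exists c.
    apply succ_inj. rewrite <- Hz. ring.
Qed.

Lemma lt_iff_succ_le (x y : M) : x ≺ y <-> x ⊕ I ≼ y.
Proof.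
  unfold slt. rewrite !le_iff_add. split.
  - intros [[z Hz] Hne]. destruct (classic (z = Z)) as [->|Hz0].
    + rewrite add_0_l in Hz. contradiction.
    + destruct (nonzero_succ _ Hz0) as [c ->]. exists c. rewrite <- Hz. ring.
  - intros [z Hz]. split.
    + exists (z ⊕ I). rewrite <- Hz. ring.
    + intros E0. rewrite <- E0 in Hz.
      assert (E : (z ⊕ I) ⊕ x = Z ⊕ x)
        by (transitivity (z ⊕ (x ⊕ I)); [ring | rewrite Hz; ring]).
      apply add_cancel_r in E. eapply succ_neq0; eauto.
Qed.

Lemma lt_succ_le (x y : M) : x ≺ y -> x ⊕ I ≼ y. Proof. apply lt_iff_succ_le. Qed.
Lemma succ_le_lt (x y : M) : x ⊕ I ≼ y -> x ≺ y. Proof. apply lt_iff_succ_le. Qed.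

Lemma not_le_lt (x y : M) : ~ x ≼ y -> y ≺ x.
Proof.
  intros H. split. destruct (le_total x y); tauto. intros E; subst; apply H, le_refl.
Qed.

Lemma lt_irrefl (x : M) : ~ x ≺ x.
Proof. intros [_ H]. auto. Qed.

Lemma lt_not_le (x y : M) : x ≺ y -> ~ y ≼ x.
Proof. intros [H1 H2] H3. apply H2, le_antisymm; auto. Qed.

Lemma le_lt_trans (x y z : M) : x ≼ y -> y ≺ z -> x ≺ z.
Proof. rewrite !lt_iff_succ_le. intros H1 H2. eapply le_trans; [|exact H2]. rewrite !(add_comm _ I).
  apply le_iff_add in H1 as [a Ha]. apply le_iff_add. exists a. rewrite <- Ha; ring. Qed.

Lemma lt_le_trans (x y z : M) : x ≺ y -> y ≼ z -> x ≺ z.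
Proof. rewrite !lt_iff_succ_le. intros H1 H2. eapply le_trans; eauto. Qed.

Lemma lt_le_incl (x y : M) : x ≺ y -> x ≼ y.
Proof. intros [H _]; auto. Qed.

Lemma add_le_mono_r (x y z : M) : x ≼ y -> x ⊕ z ≼ y ⊕ z.
Proof. rewrite !le_iff_add. intros [a Ha]. exists a. subst; ring. Qed.

Lemma add_le_cancel_r (x y z : M) : x ⊕ z ≼ y ⊕ z -> x ≼ y.
Proof.
  rewrite !le_iff_add. intros [a Ha]. exists a. apply (add_cancel_r _ _ z). rewrite <- Ha; ring.
Qed.

Lemma mul_le_mono_r (x y z : M) : x ≼ y -> x ⊗ z ≼ y ⊗ z.
Proof. rewrite !le_iff_add. intros [a Ha]. exists (a ⊗ z). subst; ring. Qed.

Lemma mul_le_mono (x y u v : M) : x ≼ y -> u ≼ v -> x ⊗ u ≼ y ⊗ v.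
Proof.
  intros H1 H2. eapply le_trans; [apply mul_le_mono_r, H1|].
  rewrite !(mul_comm y). apply mul_le_mono_r, H2.
Qed.

Lemma mul_le_cancel_r (x y z : M) : z <> Z -> x ⊗ z ≼ y ⊗ z -> x ≼ y.
Proof.
  intros Hz H. destruct (le_total x y) as [|H']; auto.
  apply le_iff_add in H' as [a Ha]. subst x. apply le_iff_add in H as [b Hb].
  assert (E : (b ⊕ a ⊗ z) ⊕ y ⊗ z = Z ⊕ y ⊗ z) by (rewrite <- Hb at 2; ring).
  apply add_cancel_r, add_eq_0 in E as [_ E]. apply mul_eq_0 in E as [->|]; [|contradiction].
  rewrite add_0_l. apply le_refl.
Qed.

Lemma mul_cancel_r (x y z : M) : z <> Z -> x ⊗ z = y ⊗ z -> x = y.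
Proof.
  intros Hz E. apply le_antisymm; apply (mul_le_cancel_r _ _ z Hz); rewrite E; apply le_refl.
Qed.

Lemma neq0_ge1 (x : M) : x <> Z -> I ≼ x.
Proof. intros H. destruct (nonzero_succ _ H) as [c ->]. apply le_add_l. Qed.

Lemma le_mul_r (x y : M) : y <> Z -> x ≼ x ⊗ y.
Proof.
  intros H. rewrite (mul_comm x y), <- (mul_1_l x) at 1. apply mul_le_mono_r, neq0_ge1, H.
Qed.

Lemma le_1_r (x : M) : x ≼ I -> x = Z \/ x = I.
Proof.
  intros H. rewrite <- (add_0_l I) in H. apply le_succ_r in H as [H|H].
  - left; apply le_0_r, H.
  - right; rewrite H; ring.
Qed.

Lemma one_lt (x : M) : x <> Z -> x <> I -> I ≺ x.
Proof. intros H0 H1. apply not_le_lt. intros H. apply le_1_r in H as [|]; auto. Qed.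

Lemma lt_neq0 (r m : M) : r ≺ m -> m <> Z.
Proof. intros H ->. apply (lt_not_le _ _ H), le_0_l. Qed.

Lemma mul_lt_mono_l (u x y : M) : u <> Z -> x ≺ y -> u ⊗ x ≺ u ⊗ y.
Proof.
  intros Hu H. apply succ_le_lt. apply lt_succ_le in H. apply le_iff_add in H as [z Hz]. subst y.
  apply le_iff_add. destruct (nonzero_succ u Hu) as [u' ->]. exists (u' ⊕ z ⊗ (u' ⊕ I)). ring.
Qed.

Lemma lt_succ_r (x y : M) : x ≺ y ⊕ I <-> x ≼ y.
Proof.
  rewrite lt_iff_succ_le. split.
  - apply add_le_cancel_r.
  - apply add_le_mono_r.
Qed.

Lemma le_lt_or_eq (x y : M) : x ≼ y -> x ≺ y \/ x = y.
Proof. intros H. destruct (classic (x = y)) as [|Hne]; [right | left; split]; auto. Qed.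

(** * Least number principle and division with remainder *)

(* Were there no least witness, Σ1-induction on [b] would show that no [a ≼ b] is one. *)
Lemma least_element f rho (P : M -> Prop) : Delta0 f ->
  (forall a, sat (upd rho 0 a) f <-> P a) -> (exists a, P a) ->
  exists a, P a /\ forall b, P b -> a ≼ b.
Proof.
  intros Hd Hf [a0 Ha0]. apply NNPP. intros Hno.
  set (v := S (form_bound f)).
  assert (Hshift : forall a b, sat (upd (upd rho v b) 0 a) f <-> P a).
  { intros a b. rewrite <- Hf. apply sat_ext. intros w Hw. unfold upd.
    destruct (Nat.eqb w 0); auto. replace (Nat.eqb w v) with false; auto.
    symmetry; apply Nat.eqb_neq. unfold v; lia. }
  assert (Hall : forall b a, a ≼ b -> ~ P a).
  { apply (sigma1_ind (Fall 0 (Fimp (Fle (Tvar 0) (Tvar v)) (Fnot f))) v rho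
             (fun b => forall a, a ≼ b -> ~ P a)).
    - apply S1_d0. constructor; [reflexivity | constructor; auto].
    - intros b. cbn. assert (Hv0 : v <> 0) by (unfold v; lia).
      split; intros H a; specialize (H a);
        rewrite ?upd_same, ?(upd_diff _ _ 0 v _ Hv0), ?upd_same, ?Hshift in *; auto.
    - intros a Ha HPa. apply le_0_r in Ha. subst. apply Hno. exists Z.
      split; auto. intros; apply le_0_l.
    - intros b IH a Ha HPa. apply le_succ_r in Ha as [Ha| ->]; [eapply IH; eauto|].
      apply Hno. exists (b ⊕ I). split; auto. intros c Hc.
      destruct (classic (c ≼ b)) as [Hcb|Hcb].
      + exfalso; eapply IH; eauto.
      + apply lt_succ_le, not_le_lt, Hcb. }
  exact (Hall a0 a0 (le_refl a0) Ha0).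
Qed.

Lemma div_mod_exists (x d : M) : d <> Z -> exists q r, x = q ⊗ d ⊕ r /\ r ≺ d.
Proof.
  intros Hd. setoid_rewrite lt_iff_succ_le. revert x.
  sigma1_induction
    (Fex 3 (Fex 4 (Fand (Feq (Tvar 0) (Tadd (Tmul (Tvar 3) (Tvar 1)) (Tvar 4)))
                        (Fle (Tadd (Tvar 4) Tone) (Tvar 1)))))
    (fun _ : nat => d).
  - exists Z, Z. split. ring. rewrite add_0_l. apply neq0_ge1, Hd.
  - intros a [q [r [E H]]]. apply le_iff_add in H as [z Hz]. destruct (classic (z = Z)) as [->|Hz0].
    + exists (q ⊕ I), Z. split. rewrite E, <- Hz. ring. rewrite add_0_l. apply neq0_ge1, Hd.
    + destruct (nonzero_succ _ Hz0) as [w ->]. exists q, (r ⊕ I). split. rewrite E. ring.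
      apply le_iff_add. exists w. rewrite <- Hz. ring.
Qed.

Lemma div_mod_unique (q r q' r' d : M) :
  q ⊗ d ⊕ r = q' ⊗ d ⊕ r' -> r ≺ d -> r' ≺ d -> q = q' /\ r = r'.
Proof.
  revert q r q' r'.
  assert (W : forall q r q' r', q ≼ q' ->
    q ⊗ d ⊕ r = q' ⊗ d ⊕ r' -> r ≺ d -> r' ≺ d -> q = q' /\ r = r').
  { intros q r q' r' Hq E Hr Hr'. apply le_iff_add in Hq as [k Hk]. subst q'.
    assert (E2 : r = k ⊗ d ⊕ r') by (apply (add_cancel_l _ _ (q ⊗ d)); rewrite E; ring).
    destruct (classic (k = Z)) as [->|Hk].
    - rewrite mul_0_l, add_0_l in E2. split. ring. auto.
    - exfalso. apply (lt_not_le _ _ Hr). rewrite E2. eapply le_trans; [|apply le_add_r].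
      rewrite mul_comm. apply le_mul_r, Hk. }
  intros q r q' r' E Hr Hr'. destruct (le_total q q') as [H|H].
  - apply W; auto.
  - destruct (W q' r' q r H) as [-> ->]; auto.
Qed.

Local Infix "∣" := (@sdvd M) (at level 70).

Lemma dvd_refl a : a ∣ a. Proof. exists I. ring. Qed.
Lemma dvd_0_r a : a ∣ Z. Proof. exists Z. ring. Qed.
Lemma dvd_trans a b c : a ∣ b -> b ∣ c -> a ∣ c.
Proof. intros [k ->] [l ->]. exists (k ⊗ l). ring. Qed.
Lemma dvd_mul_r a b c : a ∣ b -> a ∣ b ⊗ c.
Proof. intros [k ->]. exists (k ⊗ c). ring. Qed.
Lemma dvd_mul_l a b c : a ∣ b -> a ∣ c ⊗ b.
Proof. rewrite mul_comm. apply dvd_mul_r. Qed.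
Lemma dvd_factor_l a b : a ∣ a ⊗ b. Proof. exists b; ring. Qed.
Lemma dvd_factor_r a b : a ∣ b ⊗ a. Proof. exists b; ring. Qed.

Lemma dvd_neq0 a b : a ∣ b -> b <> Z -> a <> Z.
Proof. intros [k ->] Hb ->. apply Hb. ring. Qed.

Lemma dvd_le a b : a ∣ b -> b <> Z -> a ≼ b.
Proof. intros [k ->] H. apply le_mul_r. intros ->. apply H. ring. Qed.

Lemma dvd_add_cancel_l a b c : a ∣ b ⊕ c -> a ∣ b -> a ∣ c.
Proof.
  intros [m Hm] [k Hk]. destruct (classic (a = Z)) as [->|Ha].
  - exists Z. rewrite mul_0_l in Hk. subst b. rewrite add_0_l, mul_0_l in Hm. rewrite Hm; ring.
  - assert (Hkm : k ≼ m).
    { apply (mul_le_cancel_r _ _ a Ha). rewrite (mul_comm k), (mul_comm m), <- Hk, <- Hm.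
      apply le_add_r. }
    apply le_iff_add in Hkm as [j Hj]. subst m. exists j.
    apply (add_cancel_l _ _ b). rewrite Hm, Hk. ring.
Qed.

Lemma dvd_1_r d : d ∣ I -> d = I.
Proof.
  intros H. destruct (le_1_r _ (dvd_le _ _ H one_neq0)) as [->|]; auto.
  exfalso. apply (dvd_neq0 _ _ H one_neq0). reflexivity.
Qed.

Lemma dvd_mul_cancel_l a b c : c <> Z -> c ⊗ a ∣ c ⊗ b -> a ∣ b.
Proof.
  intros Hc [k Hk]. exists k. apply (mul_cancel_r _ _ c Hc). rewrite (mul_comm b), Hk. ring.
Qed.

(* The least [m > 0] with [x ∣ m y] is [x / gcd x y]; it stands in for the gcd. *)
Lemma least_multiplier (x y : M) : x <> Z ->
  exists m, m <> Z /\ x ∣ m ⊗ y /\ forall c, x ∣ c ⊗ y -> m ∣ c.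
Proof.
  intros Hx.
  destruct (least_element
    (Fand (Fnot (Feq (Tvar 0) Tzero))
       (fex_le 3 (Tmul (Tvar 0) (Tvar 2)) (Feq (Tmul (Tvar 0) (Tvar 2)) (Tmul (Tvar 1) (Tvar 3)))))
    (fun i : nat => match i with 1 => x | _ => y end)
    (fun c => c <> Z /\ x ∣ c ⊗ y)) as [m [[Hm0 Hm] Hmin]].
  - prove_delta0.
  - intros c. cbn. split.
    + intros [H1 [k [_ Hk]]]. split; auto. exists k; auto.
    + intros [H1 [k Hk]]. split; auto. exists k. split; auto.
      rewrite Hk, mul_comm. apply le_mul_r, Hx.
  - exists x. split; auto. exists y. ring.
  - exists m. split; auto. split; auto.
    intros c Hc. destruct (div_mod_exists c m Hm0) as [q [r [E Hr]]].
    destruct (classic (r = Z)) as [->|Hr0].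
    + exists q. rewrite E. ring.
    + exfalso. apply (lt_not_le _ _ Hr). apply Hmin. split; auto.
      apply (dvd_add_cancel_l _ (q ⊗ (m ⊗ y))).
      * replace (q ⊗ (m ⊗ y) ⊕ r ⊗ y) with (c ⊗ y) by (rewrite E; ring). auto.
      * apply dvd_mul_l; auto.
Qed.

Lemma prime_neq0 p : sprime p -> p <> Z.
Proof. intros [Hp _] ->. apply (lt_not_le _ _ Hp), le_0_l. Qed.

Lemma prime_neq1 p : sprime p -> p <> I.
Proof. intros [Hp _] ->. apply (lt_irrefl _ Hp). Qed.

Lemma prime_dvd_mul p a b : sprime p -> p ∣ a ⊗ b -> p ∣ a \/ p ∣ b.
Proof.
  intros Hp H. destruct (least_multiplier p b (prime_neq0 p Hp)) as [m [Hm0 [Hm Hmin]]].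
  assert (Hmp : m ∣ p) by (apply Hmin, dvd_mul_r, dvd_refl).
  destruct (proj2 Hp m Hmp) as [->| ->].
  - right. rewrite mul_1_l in Hm. auto.
  - left. apply Hmin, H.
Qed.

Lemma prime_divisor_exists (n : M) : n <> Z -> n <> I -> exists p, sprime p /\ p ∣ n.
Proof.
  intros Hn0 Hn1.
  destruct (least_element
    (Fand (Fle (Tadd Tone Tone) (Tvar 0))
          (fex_le 3 (Tvar 1) (Feq (Tvar 1) (Tmul (Tvar 0) (Tvar 3)))))
    (fun _ : nat => n) (fun c => I ≺ c /\ c ∣ n)) as [p [[Hp1 Hpn] Hmin]].
  - prove_delta0.
  - intros c. cbn. rewrite lt_iff_succ_le. split.
    + intros [H1 [k [_ Hk]]]. split; auto. exists k; auto.
    + intros [H1 [k Hk]]. split; auto. exists k. split; auto.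
      rewrite Hk, mul_comm. apply le_mul_r. intros ->. apply Hn0. rewrite Hk; ring.
  - exists n. split; [apply one_lt|apply dvd_refl]; auto.
  - exists p. split; auto. split; auto.
    intros d Hd. destruct (classic (d = I)) as [|Hd1]; auto. right.
    assert (Hp0 : p <> Z) by (apply (lt_neq0 I), Hp1).
    apply le_antisymm.
    + apply dvd_le; auto.
    + apply Hmin. split.
      * apply one_lt; auto. apply (dvd_neq0 d p); auto.
      * eapply dvd_trans; eauto.
Qed.

Lemma coprime_sym x y : scoprime x y -> scoprime y x.
Proof. intros H d H1 H2; auto. Qed.

Lemma prime_coprime p x : sprime p -> ~ p ∣ x -> scoprime p x.
Proof. intros [_ Hpd] Hn d H1 H2. destruct (Hpd d H1) as [| ->]; auto. contradiction. Qed.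

Lemma coprime_mul_l a b c : scoprime a c -> scoprime b c -> scoprime (a ⊗ b) c.
Proof.
  intros Ha Hb d H1 H2. apply NNPP. intros Hd1.
  destruct (classic (d = Z)) as [->|Hd0].
  - destruct H2 as [k Hk]. rewrite mul_0_l in Hk. subst c.
    assert (a = I) by (apply Ha; [apply dvd_refl|apply dvd_0_r]).
    assert (b = I) by (apply Hb; [apply dvd_refl|apply dvd_0_r]). subst.
    apply (dvd_neq0 _ _ H1); [|reflexivity]. rewrite mul_1_l. apply one_neq0.
  - destruct (prime_divisor_exists d Hd0 Hd1) as [p [Hp Hpd]].
    apply (prime_neq1 p Hp).
    destruct (prime_dvd_mul p a b Hp (dvd_trans p d _ Hpd H1)) as [Hpa|Hpb].
    + apply Ha; [exact Hpa | exact (dvd_trans _ _ _ Hpd H2)].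
    + apply Hb; [exact Hpb | exact (dvd_trans _ _ _ Hpd H2)].
Qed.

Lemma gcd_decomposition x y : x <> Z -> exists g a b, x = g ⊗ a /\ y = g ⊗ b /\ scoprime a b.
Proof.
  intros Hx. destruct (least_multiplier x y Hx) as [m [Hm0 [Hm Hmin]]].
  assert (Hmx : m ∣ x) by (apply Hmin, dvd_mul_r, dvd_refl).
  destruct Hmx as [g Hg].
  assert (Hgy : g ∣ y). { apply (dvd_mul_cancel_l _ _ m Hm0). rewrite <- Hg. auto. }
  destruct Hgy as [b Hb]. exists g, m, b. split; [rewrite Hg; ring|]. split; auto.
  intros d [m' Hm'] [b' Hb']. subst m b.
  assert (Hd0 : d <> Z) by (intros ->; apply Hm0; ring).
  assert (Hm'0 : m' <> Z) by (intros ->; apply Hm0; ring).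
  assert (H : d ⊗ m' ∣ m') by (apply Hmin; exists b'; rewrite Hg, Hb; ring).
  apply dvd_le in H; auto. rewrite <- (mul_1_l m') in H at 2. apply mul_le_cancel_r in H; auto.
  apply le_1_r in H as [|]; auto. contradiction.
Qed.

Lemma rem_exists (a m : M) : exists r, m <> Z -> exists q, a = q ⊗ m ⊕ r /\ r ≺ m.
Proof.
  destruct (classic (m = Z)) as [H|H].
  - exists Z. intros; contradiction.
  - destruct (div_mod_exists a m H) as [q [r Hr]]. exists r. intros _. eauto.
Qed.

(* [rem a 0] is an unspecified junk value. *)
Definition rem (a m : M) : M := proj1_sig (constructive_indefinite_description _ (rem_exists a m)).

Lemma rem_spec a m : m <> Z -> exists q, a = q ⊗ m ⊕ rem a m /\ rem a m ≺ m.
Proof. unfold rem. destruct (constructive_indefinite_description _ _) as [r Hr]. auto. Qed.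

Lemma rem_unique a m q r : a = q ⊗ m ⊕ r -> r ≺ m -> rem a m = r.
Proof.
  intros E Hr. destruct (rem_spec a m (lt_neq0 _ _ Hr)) as [q' [E' Hr']].
  rewrite E in E' at 1. destruct (div_mod_unique _ _ _ _ _ E' Hr Hr'). auto.
Qed.

Lemma rem_lt a m : m <> Z -> rem a m ≺ m.
Proof. intros H. destruct (rem_spec a m H) as [q [_ Hq]]; auto. Qed.

Lemma rem_le a m : m <> Z -> rem a m ≼ a.
Proof.
  intros H. destruct (rem_spec a m H) as [q [E _]].
  pose proof (le_add_l (rem a m) (q ⊗ m)) as H'. rewrite <- E in H'. auto.
Qed.

Lemma rem_add_mul a m k : m <> Z -> rem (a ⊕ k ⊗ m) m = rem a m.
Proof.
  intros H. destruct (rem_spec a m H) as [q [E Hq]]. apply (rem_unique _ _ (q ⊕ k)); auto.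
  rewrite E at 1. ring.
Qed.

Lemma rem_small r m : r ≺ m -> rem r m = r.
Proof. intros H. apply (rem_unique _ _ Z); auto. ring. Qed.

(* Bounded reformulations of remainder, divisibility, coprimality and primality: each is
   literally the [cbn]-value of the corresponding Δ0 formula. *)
Definition rem_b (a m r : M) := (exists q, q ≼ a /\ a = q ⊗ m ⊕ r) /\ r ⊕ I ≼ m.
Definition dvd_b (e a : M) := exists w, w ≼ a /\ a = e ⊗ w.
Definition coprime_b (a b : M) := forall e, e ≼ a -> dvd_b e a -> dvd_b e b -> e = I.
Definition prime_b (p : M) := I ⊕ I ≼ p /\ forall d, d ≼ p -> dvd_b d p -> d = I \/ d = p.

Lemma rem_b_iff a m r : m <> Z -> (rem_b a m r <-> rem a m = r).
Proof.
  intros Hm. unfold rem_b. split.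
  - intros [[q [_ E]] H]. apply (rem_unique _ _ q); auto. apply (proj2 (lt_iff_succ_le _ _)); auto.
  - intros <-. destruct (rem_spec a m Hm) as [q [E Hq]]. split.
    + exists q. split; auto.
      pose proof (le_add_r (q ⊗ m) (rem a m)) as H'. rewrite <- E in H'.
      eapply le_trans; [|exact H']. apply le_mul_r; auto.
    + apply (proj1 (lt_iff_succ_le _ _)); auto.
Qed.

Lemma dvd_b_iff e a : a <> Z -> (dvd_b e a <-> e ∣ a).
Proof.
  intros Ha. unfold dvd_b. split.
  - intros [w [_ E]]. exists w; auto.
  - intros [w E]. exists w. split; auto. rewrite E, mul_comm. apply le_mul_r.
    intros ->. apply Ha. rewrite E; ring.
Qed.

Lemma coprime_b_iff a b : a <> Z -> b <> Z -> (coprime_b a b <-> scoprime a b).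
Proof.
  intros Ha Hb. unfold coprime_b, scoprime. split.
  - intros H e H1 H2. apply H; [apply dvd_le | apply dvd_b_iff | apply dvd_b_iff]; auto.
  - intros H e _ H1 H2. apply H; apply dvd_b_iff; auto.
Qed.

Lemma prime_b_iff p : prime_b p <-> sprime p.
Proof.
  unfold prime_b, sprime. split.
  - intros [H1 H2].
    assert (Hp : p <> Z) by (intros ->; apply le_0_r in H1; eapply succ_neq0; eauto).
    split; [apply succ_le_lt; auto|]. intros d Hd. apply H2.
    + apply dvd_le; auto.
    + apply dvd_b_iff; auto.
  - intros [H1 H2]. assert (Hp : p <> Z) by (apply (lt_neq0 I), H1).
    split; [apply lt_succ_le; auto|]. intros d _ Hd. apply H2, dvd_b_iff; auto.
Qed.

(** * Chinese remaindering and Gödel's β-function *)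

Definition bezout_rep (Q m g : M) := exists u w, Q ⊗ u ⊕ g = m ⊗ w.

Lemma bezout_rep_bounded Q m g : m <> Z -> bezout_rep Q m g ->
  exists u, u ≼ m /\ exists w, w ≼ Q ⊗ u ⊕ g /\ Q ⊗ u ⊕ g = m ⊗ w.
Proof.
  intros Hm [u [w E]]. destruct (div_mod_exists u m Hm) as [a [u0 [-> Hu0]]].
  assert (Hle : Q ⊗ a ≼ w).
  { apply (mul_le_cancel_r _ _ m Hm). rewrite (mul_comm w), <- E.
    apply le_iff_add. exists (Q ⊗ u0 ⊕ g). ring. }
  apply le_iff_add in Hle as [k <-].
  assert (E0 : Q ⊗ u0 ⊕ g = m ⊗ k).
  { apply (add_cancel_r _ _ (m ⊗ (Q ⊗ a))).
    transitivity (Q ⊗ (a ⊗ m ⊕ u0) ⊕ g); [ring|]. rewrite E. ring. }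
  exists u0. split; [apply lt_le_incl; auto|]. exists k. split; auto.
  rewrite E0, mul_comm. apply le_mul_r; auto.
Qed.

Lemma bezout_rep_rem Q m g h a r : m <> Z ->
  bezout_rep Q m g -> bezout_rep Q m h -> h = a ⊗ g ⊕ r -> bezout_rep Q m r.
Proof.
  intros Hm [ug [wg Eg]] [uh [wh Eh]] Eh2. destruct (nonzero_succ m Hm) as [m1 Em].
  set (X := Q ⊗ (uh ⊕ a ⊗ ug ⊗ m1) ⊕ r).
  assert (HX : m ∣ a ⊗ g ⊗ m ⊕ X).
  { exists (wh ⊕ a ⊗ m1 ⊗ wg). unfold X.
    transitivity (Q ⊗ uh ⊕ h ⊕ a ⊗ m1 ⊗ (Q ⊗ ug ⊕ g)).
    - rewrite Eh2, Em. ring.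
    - rewrite Eh, Eg. ring. }
  destruct (dvd_add_cancel_l _ _ _ HX (dvd_factor_r _ _)) as [w Hw].
  exists (uh ⊕ a ⊗ ug ⊗ m1), w. exact Hw.
Qed.

Lemma bezout_mod Q m : m <> Z -> scoprime Q m -> exists u w, Q ⊗ u ⊕ I = m ⊗ w.
Proof.
  intros Hm Hc.
  destruct (least_element
    (Fand (Fnot (Feq (Tvar 0) Tzero))
       (fex_le 3 (Tvar 2) (fex_le 4 (Tadd (Tmul (Tvar 1) (Tvar 3)) (Tvar 0))
          (Feq (Tadd (Tmul (Tvar 1) (Tvar 3)) (Tvar 0)) (Tmul (Tvar 2) (Tvar 4))))))
    (fun i : nat => match i with 1 => Q | _ => m end)
    (fun g => g <> Z /\ bezout_rep Q m g)) as [g [[Hg0 Hg] Hmin]].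
  - prove_delta0.
  - intros g. cbn. split.
    + intros [H1 [u [_ [w [_ E]]]]]. split; [|exists u, w]; auto.
    + intros [H1 H2]. split; auto. apply bezout_rep_bounded; auto.
  - exists m. split; auto. exists Z, I. ring.
  - assert (Hdiv : forall h, bezout_rep Q m h -> g ∣ h).
    { intros h Hh. destruct (div_mod_exists h g Hg0) as [a [r [Eh Hr]]].
      destruct (classic (r = Z)) as [->|Hr0]; [exists a; rewrite Eh; ring|].
      exfalso. apply (lt_not_le _ _ Hr), Hmin. split; auto.
      apply (bezout_rep_rem Q m g h a r); auto. }
    destruct (nonzero_succ m Hm) as [m1 Em].
    assert (Hg1 : g = I).
    { apply Hc; apply Hdiv.
      - exists m1, Q. rewrite Em. ring.
      - exists Z, I. ring. }
    subst g. exact Hg.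
Qed.

Lemma crt_step c Q m s : scoprime Q m -> s ≺ m -> exists t, rem (c ⊕ Q ⊗ t) m = s.
Proof.
  intros Hc Hs. pose proof (lt_neq0 _ _ Hs) as Hm.
  destruct (bezout_mod Q m Hm Hc) as [u [w Hw]]. destruct (nonzero_succ m Hm) as [m1 Em].
  set (t := u ⊗ (c ⊕ m1 ⊗ s)). exists t.
  destruct (div_mod_exists (c ⊕ Q ⊗ t) m Hm) as [q [r [E Hr]]].
  assert (E2 : (q ⊕ s) ⊗ m ⊕ r = (w ⊗ (c ⊕ m1 ⊗ s)) ⊗ m ⊕ s).
  { transitivity (c ⊕ Q ⊗ t ⊕ m ⊗ s); [rewrite E; ring|].
    transitivity ((Q ⊗ u ⊕ I) ⊗ (c ⊕ m1 ⊗ s) ⊕ s); [unfold t; rewrite Em; ring|].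
    rewrite Hw. ring. }
  apply div_mod_unique in E2 as [_ <-]; auto. apply (rem_unique _ _ q); auto.
Qed.

Lemma rem_add_multiple c Q t m : m ∣ Q -> rem (c ⊕ Q ⊗ t) m = rem c m.
Proof.
  intros [k ->]. destruct (classic (m = Z)) as [->|Hm].
  - rewrite mul_0_l, mul_0_l, add_0_r. auto.
  - replace (c ⊕ m ⊗ k ⊗ t) with (c ⊕ (k ⊗ t) ⊗ m) by ring. apply rem_add_mul; auto.
Qed.

Lemma common_multiple_upto (L : M) : exists D, D <> Z /\ forall n, I ≼ n -> n ≼ L -> n ∣ D.
Proof.
  cut (exists D, D <> Z /\ forall n, n ≼ L -> I ≼ n -> dvd_b n D).
  { intros [D [HD H]]. exists D. split; auto. intros n H1 H2. apply dvd_b_iff; auto. }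
  revert L.
  sigma1_induction
    (Fex 1 (Fand (Fnot (Feq (Tvar 1) Tzero))
       (fall_le 2 (Tvar 0) (Fimp (Fle Tone (Tvar 2)) (fdvd (Tvar 2) (Tvar 1) 3)))))
    (fun _ : nat => Z).
  - exists I. split; [apply one_neq0|]. intros n H1 H2. apply le_0_r in H1. subst.
    exfalso. apply (lt_not_le Z I); auto. apply succ_le_lt. rewrite add_0_l. apply le_refl.
  - intros L [D [HD H]]. assert (HD' : D ⊗ (L ⊕ I) <> Z) by (apply mul_neq0, succ_neq0; auto).
    exists (D ⊗ (L ⊕ I)). split; auto.
    intros n H1 H2. apply dvd_b_iff; auto. apply le_succ_r in H1 as [H1| ->].
    + apply dvd_mul_r. apply dvd_b_iff; auto.
    + apply dvd_factor_r.
Qed.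

(* Gödel's β-function: the pair [(c, d)] codes the sequence [i ↦ rem c (beta_mod d i)]. *)
Definition beta_mod (d i : M) := (i ⊕ I) ⊗ d ⊕ I.

Lemma beta_mod_neq0 d i : beta_mod d i <> Z.
Proof. apply succ_neq0. Qed.

Lemma beta_mod_mono d d' i : d ≼ d' -> beta_mod d i ≼ beta_mod d' i.
Proof.
  intros H. unfold beta_mod. apply add_le_mono_r. rewrite !(mul_comm (i ⊕ I)).
  apply mul_le_mono_r; auto.
Qed.

(* A prime dividing two moduli divides their difference [(j - i) d], hence [d]
   (as [j - i ≤ L] divides [d]), hence [1]. *)
Lemma beta_mod_coprime D L i j : (forall n, I ≼ n -> n ≼ L -> n ∣ D) -> i ≺ j -> j ≼ L ->
  scoprime (beta_mod D i) (beta_mod D j).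
Proof.
  intros HD Hij HjL e H1 H2. apply NNPP. intros He1.
  destruct (prime_divisor_exists e (dvd_neq0 _ _ H1 (beta_mod_neq0 D i)) He1) as [p [Hp Hpe]].
  assert (Hp1 : p ∣ beta_mod D i) by (apply (dvd_trans p e); auto).
  assert (Hp2 : p ∣ beta_mod D j) by (apply (dvd_trans p e); auto).
  apply lt_iff_succ_le, le_iff_add in Hij as [k Hk].
  assert (Hp3 : p ∣ (k ⊕ I) ⊗ D).
  { apply (dvd_add_cancel_l _ (beta_mod D i)); auto.
    replace (beta_mod D i ⊕ (k ⊕ I) ⊗ D) with (beta_mod D j); auto.
    unfold beta_mod. rewrite <- Hk. ring. }
  assert (HpD : p ∣ D).
  { destruct (prime_dvd_mul _ _ _ Hp Hp3) as [H|H]; auto.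
    apply (dvd_trans p (k ⊕ I)); auto. apply HD; [apply le_add_l|].
    eapply le_trans; [|exact HjL]. rewrite <- Hk. apply le_iff_add. exists i. ring. }
  apply (prime_neq1 p Hp), dvd_1_r, (dvd_add_cancel_l _ ((i ⊕ I) ⊗ D)); auto.
  apply dvd_mul_l; auto.
Qed.

Section BetaExtend.

Variables c d y v d' : M.
Hypothesis HD : forall n, I ≼ n -> n ≼ y ⊕ I -> n ∣ d'.
Hypothesis Hc : forall i, i ≼ y -> rem c (beta_mod d i) ≺ beta_mod d' i.
Hypothesis Hv : v ≺ beta_mod d' (y ⊕ I).

Let target i := if excluded_middle_informative (i ≼ y) then rem c (beta_mod d i) else v.

Lemma target_le i : i ≼ y -> target i = rem c (beta_mod d i).
Proof. intros H. unfold target. destruct (excluded_middle_informative _); tauto. Qed.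

Lemma target_succ : target (y ⊕ I) = v.
Proof.
  unfold target. destruct (excluded_middle_informative _) as [H|]; auto.
  exfalso. apply (lt_not_le y (y ⊕ I)); auto. apply lt_succ_r, le_refl.
Qed.

Lemma target_lt i : i ≼ y ⊕ I -> target i ≺ beta_mod d' i.
Proof.
  intros Hi. destruct (classic (i ≼ y)) as [H|H].
  - rewrite target_le; auto.
  - apply le_succ_r in Hi as [| ->]; [contradiction|]. rewrite target_succ. exact Hv.
Qed.

Definition crt_inv (k c' Q : M) :=
  Q <> Z /\
  (forall i, i ≼ y ⊕ I -> i ≺ k ->
     beta_mod d' i ∣ Q /\ rem c' (beta_mod d' i) = target i) /\
  (forall j, j ≼ y ⊕ I -> k ≼ j -> scoprime Q (beta_mod d' j)).

Definition crt_inv_b (k c' Q : M) :=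
  Q <> Z /\
  (forall i, i ≼ y ⊕ I -> i ⊕ I ≼ k -> dvd_b (beta_mod d' i) Q /\
     ((i ≼ y -> exists r, r ≼ c /\ (rem_b c (beta_mod d i) r /\ rem_b c' (beta_mod d' i) r)) /\
      (i = y ⊕ I -> rem_b c' (beta_mod d' i) v))) /\
  (forall j, j ≼ y ⊕ I -> k ≼ j -> coprime_b Q (beta_mod d' j)).

Lemma crt_inv_b_iff k c' Q : crt_inv_b k c' Q <-> crt_inv k c' Q.
Proof.
  split; intros [HQ [Hi Hj]]; (split; [exact HQ|split]).
  - intros i HiL Hik. apply lt_iff_succ_le in Hik.
    destruct (Hi i HiL Hik) as [Hdv [Hle Hsucc]]. split; [apply dvd_b_iff; auto|].
    destruct (classic (i ≼ y)) as [Hy|Hy].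
    + rewrite target_le; auto. destruct (Hle Hy) as [r [_ [R1 R2]]].
      apply rem_b_iff in R1, R2; try apply beta_mod_neq0. congruence.
    + apply le_succ_r in HiL as [| ->]; [contradiction|].
      rewrite target_succ. apply rem_b_iff, Hsucc; auto. apply beta_mod_neq0.
  - intros j HjL Hkj. apply coprime_b_iff, Hj; auto. apply beta_mod_neq0.
  - intros i HiL Hik. apply lt_iff_succ_le in Hik.
    destruct (Hi i HiL Hik) as [Hdv Hr]. split; [apply dvd_b_iff; auto|]. split.
    + intros Hy. exists (rem c (beta_mod d i)). split; [apply rem_le, beta_mod_neq0|].
      split; apply rem_b_iff; try apply beta_mod_neq0; auto. rewrite Hr, target_le; auto.
    + intros ->. apply rem_b_iff; [apply beta_mod_neq0|]. rewrite Hr. apply target_succ.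
  - intros j HjL Hkj. apply coprime_b_iff; auto. apply beta_mod_neq0.
Qed.

Lemma crt_inv_0 : crt_inv Z Z I.
Proof.
  split; [apply one_neq0|split].
  - intros i _ Hi. exfalso. apply (lt_not_le _ _ Hi), le_0_l.
  - intros j _ _ e H1 _. apply dvd_1_r; auto.
Qed.

Lemma crt_inv_succ k c' Q : crt_inv k c' Q -> exists c'' Q', crt_inv (k ⊕ I) c'' Q'.
Proof.
  intros [HQ [Hi Hj]]. destruct (classic (k ≼ y ⊕ I)) as [HkL|HkL].
  - destruct (crt_step c' Q (beta_mod d' k) (target k) (Hj k HkL (le_refl k)) (target_lt k HkL))
      as [t Ht].
    exists (c' ⊕ Q ⊗ t), (Q ⊗ beta_mod d' k).
    split; [apply mul_neq0; auto; apply beta_mod_neq0|split].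
    + intros i HiL Hik. apply lt_succ_r, le_lt_or_eq in Hik as [Hik| ->].
      * destruct (Hi i HiL Hik) as [Hdv Hr]. split; [apply dvd_mul_r; auto|].
        rewrite rem_add_multiple; auto.
      * split; [apply dvd_factor_r | exact Ht].
    + intros j HjL Hkj. apply coprime_mul_l.
      * apply Hj; auto. eapply le_trans; [|exact Hkj]. apply le_add_r.
      * apply (beta_mod_coprime d' (y ⊕ I)); auto. apply succ_le_lt; auto.
  - apply not_le_lt in HkL. exists c', Q. split; [exact HQ|split].
    + intros i HiL Hik. apply Hi; auto. apply (le_lt_trans _ (y ⊕ I)); auto.
    + intros j HjL Hkj. exfalso. apply (lt_not_le _ _ HkL).
      eapply le_trans; [|exact HjL]. eapply le_trans; [|exact Hkj]. apply le_add_r.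
Qed.

Lemma crt_inv_exists k : exists c' Q, crt_inv k c' Q.
Proof.
  cut (exists c' Q, crt_inv_b k c' Q).
  { intros [c' [Q H]]. exists c', Q. apply crt_inv_b_iff, H. }
  revert k.
  sigma1_induction
    (Fex 7 (Fex 8 (Fand (Fnot (Feq (Tvar 8) Tzero))
      (Fand (fall_le 9 (Tvar 1) (Fimp (Fle (Tadd (Tvar 9) Tone) (Tvar 0))
          (Fand (fdvd (tbeta_mod (Tvar 2) (Tvar 9)) (Tvar 8) 10)
            (Fand (Fimp (Fle (Tvar 9) (Tvar 5))
                    (fex_le 12 (Tvar 3)
                      (Fand (frem (Tvar 3) (tbeta_mod (Tvar 4) (Tvar 9)) (Tvar 12) 10)
                            (frem (Tvar 7) (tbeta_mod (Tvar 2) (Tvar 9)) (Tvar 12) 10))))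
                  (Fimp (Feq (Tvar 9) (Tadd (Tvar 5) Tone))
                    (frem (Tvar 7) (tbeta_mod (Tvar 2) (Tvar 9)) (Tvar 6) 10))))))
        (fall_le 9 (Tvar 1) (Fimp (Fle (Tvar 0) (Tvar 9))
          (fcoprime (Tvar 8) (tbeta_mod (Tvar 2) (Tvar 9)) 11 10)))))))
    (fun i : nat => match i with 1 => y ⊕ I | 2 => d' | 3 => c | 4 => d | 5 => y | _ => v end).
  - exists Z, I. apply crt_inv_b_iff, crt_inv_0.
  - intros k [c' [Q H]]. apply crt_inv_b_iff, crt_inv_succ in H as [c'' [Q' H]].
    exists c'', Q'. apply crt_inv_b_iff, H.
Qed.

Lemma beta_extend : exists c',
  (forall i, i ≼ y -> rem c' (beta_mod d' i) = rem c (beta_mod d i)) /\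
  rem c' (beta_mod d' (y ⊕ I)) = v.
Proof.
  destruct (crt_inv_exists (y ⊕ I ⊕ I)) as [c' [Q [_ [Hi _]]]]. exists c'. split.
  - intros i Hi'. rewrite <- target_le; auto. apply Hi.
    + eapply le_trans; [exact Hi'|]. apply le_add_r.
    + apply lt_succ_r. eapply le_trans; [exact Hi'|]. apply le_add_r.
  - rewrite <- target_succ. apply Hi; [apply le_refl|]. apply lt_succ_r, le_refl.
Qed.

End BetaExtend.

(** * The definable exponential *)

(* [(c, d)] codes the sequence [1, x, x^2, ..., x^y]. *)
Definition exp_code (x y c d : M) := d <> Z /\ rem c (beta_mod d Z) = I /\
  forall i, i ⊕ I ≼ y -> rem c (beta_mod d (i ⊕ I)) = rem c (beta_mod d i) ⊗ x.

Definition exp_code_b (x y c d : M) := d <> Z /\ (rem_b c (beta_mod d Z) I /\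
  forall i, i ≼ y -> i ⊕ I ≼ y ->
    exists r, r ≼ c /\ (rem_b c (beta_mod d i) r /\ rem_b c (beta_mod d (i ⊕ I)) (r ⊗ x))).

Lemma exp_code_b_iff x y c d : exp_code_b x y c d <-> exp_code x y c d.
Proof.
  split; intros [H0 [H1 H2]]; (split; [exact H0|split]);
    try (apply rem_b_iff; auto; apply beta_mod_neq0).
  - intros i Hi. destruct (H2 i) as [r [_ [R1 R2]]]; auto.
    + eapply le_trans; [|exact Hi]. apply le_add_r.
    + apply rem_b_iff in R1, R2; try apply beta_mod_neq0. congruence.
  - intros i _ Hi. exists (rem c (beta_mod d i)). split; [apply rem_le, beta_mod_neq0|].
    split; apply rem_b_iff; try apply beta_mod_neq0; auto.
Qed.

Lemma exp_code_0 x : exp_code x Z I I.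
Proof.
  split; [apply one_neq0|split].
  - apply rem_small, succ_le_lt. unfold beta_mod. apply le_iff_add. exists Z. ring.
  - intros i Hi. exfalso. apply le_0_r in Hi. eapply succ_neq0; eauto.
Qed.

(* Enlarge [d] so that the moduli admit the old entries and the new entry [v], and extend
   the code by Chinese remaindering. *)
Lemma exp_code_succ x y c d : exp_code x y c d -> exists c' d', exp_code x (y ⊕ I) c' d'.
Proof.
  intros [Hd [H0 Hs]]. set (v := rem c (beta_mod d y) ⊗ x).
  destruct (common_multiple_upto (y ⊕ I)) as [D [HD0 HD]].
  set (d' := D ⊗ (d ⊕ v ⊕ I)).
  assert (Hd'0 : d' <> Z) by (apply mul_neq0, succ_neq0; auto).
  assert (Hdd : d ⊕ v ⊕ I ≼ d') by (unfold d'; rewrite mul_comm; apply le_mul_r; auto).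
  assert (Hdd' : d ≼ d') by (eapply le_trans; [|exact Hdd]; rewrite add_assoc; apply le_add_r).
  destruct (beta_extend c d y v d') as [c' [Hc1 Hc2]].
  - intros n H1 H2. apply dvd_mul_r; auto.
  - intros i _. eapply lt_le_trans; [apply rem_lt, beta_mod_neq0|]. apply beta_mod_mono; auto.
  - apply succ_le_lt. unfold beta_mod. apply add_le_mono_r. apply (le_trans _ d').
    + eapply le_trans; [|exact Hdd]. apply le_iff_add. exists (d ⊕ I). ring.
    + rewrite mul_comm. apply le_mul_r, succ_neq0.
  - exists c', d'. split; [exact Hd'0|split].
    + rewrite Hc1; auto. apply le_0_l.
    + intros i Hi. apply add_le_cancel_r, le_lt_or_eq in Hi as [Hiy| ->].
      * apply lt_iff_succ_le in Hiy. rewrite (Hc1 (i ⊕ I) Hiy), (Hc1 i); auto.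
        eapply le_trans; [|exact Hiy]. apply le_add_r.
      * rewrite Hc2, Hc1; auto; apply le_refl.
Qed.

Lemma exp_code_exists (x y : M) : exists c d, exp_code x y c d.
Proof.
  cut (exists c d, exp_code_b x y c d).
  { intros [c [d H]]. exists c, d. apply exp_code_b_iff; auto. }
  revert y. sigma1_induction (Fex 2 (Fex 3 (fexp_code 1 0 2 3 4 5 6))) (fun _ : nat => x).
  - exists I, I. apply exp_code_b_iff, exp_code_0.
  - intros y [c [d Hc]]. apply exp_code_b_iff, exp_code_succ in Hc as [c' [d' Hc']].
    exists c', d'. apply exp_code_b_iff, Hc'.
Qed.

Lemma exp_code_unique x y c d c2 d2 : exp_code x y c d -> exp_code x y c2 d2 ->
  forall i, i ≼ y -> rem c (beta_mod d i) = rem c2 (beta_mod d2 i).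
Proof.
  intros [Hd [H0 Hs]] [Hd2 [H02 Hs2]].
  cut (forall i, i ≼ y ->
    exists r, r ≼ c /\ (rem_b c (beta_mod d i) r /\ rem_b c2 (beta_mod d2 i) r)).
  { intros H i Hi. destruct (H i Hi) as [r [_ [R1 R2]]].
    apply rem_b_iff in R1, R2; try apply beta_mod_neq0. congruence. }
  sigma1_induction
    (Fimp (Fle (Tvar 0) (Tvar 1))
       (fex_le 6 (Tvar 2) (Fand (frem (Tvar 2) (tbeta_mod (Tvar 3) (Tvar 0)) (Tvar 6) 7)
                                (frem (Tvar 4) (tbeta_mod (Tvar 5) (Tvar 0)) (Tvar 6) 7))))
    (fun i : nat => match i with 1 => y | 2 => c | 3 => d | 4 => c2 | _ => d2 end).
  - intros _. exists I. split; [rewrite <- H0; apply rem_le, beta_mod_neq0|].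
    split; apply rem_b_iff; try apply beta_mod_neq0; auto.
  - intros i IH Hi. destruct IH as [r [_ [R1 R2]]].
    { eapply le_trans; [|exact Hi]. apply le_add_r. }
    apply rem_b_iff in R1, R2; try apply beta_mod_neq0.
    exists (rem c (beta_mod d (i ⊕ I))). split; [apply rem_le, beta_mod_neq0|].
    split; apply rem_b_iff; try apply beta_mod_neq0; auto.
    rewrite Hs, Hs2; auto. congruence.
Qed.

Lemma exp_code_exists_pair x y : exists cd : M * M, exp_code x y (fst cd) (snd cd).
Proof. destruct (exp_code_exists x y) as [c [d H]]. exists (c, d). exact H. Qed.

Definition dexp (x y : M) : M :=
  let cd := proj1_sig (constructive_indefinite_description _ (exp_code_exists_pair x y)) in
  rem (fst cd) (beta_mod (snd cd) y).

Lemma dexp_spec x y c d : exp_code x y c d -> dexp x y = rem c (beta_mod d y).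
Proof.
  intros H. unfold dexp. destruct (constructive_indefinite_description _ _) as [[c' d'] H']. cbn.
  apply (exp_code_unique x y); auto. apply le_refl.
Qed.

Lemma dexp_sigma1_graph : Sigma1Graph dexp.
Proof.
  exists (Fex 3 (Fex 4 (Fand (fexp_code 0 1 3 4 5 6 7)
                             (frem (Tvar 3) (tbeta_mod (Tvar 4) (Tvar 1)) (Tvar 2) 6)))).
  split; [prove_sigma1|]. intros rho.
  change ((exists c d, exp_code_b (rho 0) (rho 1) c d /\ rem_b c (beta_mod d (rho 1)) (rho 2))
          <-> dexp (rho 0) (rho 1) = rho 2).
  split.
  - intros [c [d [Hc HR]]]. apply exp_code_b_iff in Hc.
    apply rem_b_iff in HR; [|apply beta_mod_neq0].
    rewrite (dexp_spec _ _ c d); auto.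
  - intros Hz. destruct (exp_code_exists (rho 0) (rho 1)) as [c [d Hc]]. exists c, d.
    split; [apply exp_code_b_iff; auto|]. apply rem_b_iff; [apply beta_mod_neq0|].
    rewrite <- Hz. symmetry. apply dexp_spec; auto.
Qed.

Lemma dexp_is_def_exp : IsDefExp dexp.
Proof.
  split; [|split; [|exact dexp_sigma1_graph]].
  - intros x. destruct (exp_code_exists x Z) as [c [d Hc]]. rewrite (dexp_spec _ _ c d); auto.
    apply Hc.
  - intros x y. destruct (exp_code_exists x (y ⊕ I)) as [c [d Hc]].
    assert (Hc' : exp_code x y c d).
    { destruct Hc as [H1 [H2 H3]]. split; auto. split; auto. intros i Hi. apply H3.
      eapply le_trans; [exact Hi|]. apply le_add_r. }
    rewrite (dexp_spec _ _ c d Hc), (dexp_spec _ _ c d Hc'). apply Hc. apply le_refl.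
Qed.

Fixpoint pown (x : M) (k : nat) : M := match k with O => I | S k => pown x k ⊗ x end.

Lemma pown_add x (a b : nat) : pown x (a + b) = pown x a ⊗ pown x b.
Proof.
  induction b; cbn; [rewrite Nat.add_0_r; ring|]. rewrite Nat.add_succ_r. cbn. rewrite IHb. ring.
Qed.

Lemma pown_mul x (a b : nat) : pown x (a * b) = pown (pown x a) b.
Proof.
  induction b; cbn; [rewrite Nat.mul_0_r; auto|]. rewrite Nat.mul_succ_r, pown_add, IHb. ring.
Qed.

Lemma pown_mul_base x y (k : nat) : pown (x ⊗ y) k = pown x k ⊗ pown y k.
Proof. induction k; cbn; [ring|]. rewrite IHk. ring. Qed.

Lemma pown_neq0 x (k : nat) : x <> Z -> pown x k <> Z.
Proof. intros H. induction k; cbn; [apply one_neq0|]. apply mul_neq0; auto. Qed.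

Lemma pown_le_mono_l x y (k : nat) : x ≼ y -> pown x k ≼ pown y k.
Proof. intros H. induction k; cbn; [apply le_refl|]. apply mul_le_mono; auto. Qed.

Lemma pown_lt_mono_l x y (k : nat) : x ≺ y -> pown x (S k) ≺ pown y (S k).
Proof.
  intros H. cbn. apply (le_lt_trans _ (pown y k ⊗ x)).
  - apply mul_le_mono_r, pown_le_mono_l, lt_le_incl, H.
  - apply mul_lt_mono_l; auto. apply pown_neq0. apply (lt_neq0 x), H.
Qed.

Lemma pown_le_mono_r x (a b : nat) : I ≼ x -> (a <= b)%nat -> pown x a ≼ pown x b.
Proof.
  intros Hx Hab. replace b with (a + (b - a))%nat by lia. rewrite pown_add.
  rewrite <- (mul_1_l (pown x a)) at 1. rewrite (mul_comm (pown x a)). apply mul_le_mono_r.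
  clear Hab. induction (b - a)%nat; cbn; [apply le_refl|].
  eapply le_trans; [exact IHn|]. apply le_mul_r. intros ->. apply (lt_not_le Z I); auto.
  apply succ_le_lt. rewrite add_0_l. apply le_refl.
Qed.

Lemma num_add (a b : nat) : (num (a + b) : M) = num a ⊕ num b.
Proof.
  induction b; cbn; [rewrite Nat.add_0_r; ring|]. rewrite Nat.add_succ_r. cbn. rewrite IHb. ring.
Qed.

Lemma num_mul (a b : nat) : (num (a * b) : M) = num a ⊗ num b.
Proof.
  induction b; cbn; [rewrite Nat.mul_0_r; cbn; ring|].
  rewrite Nat.mul_succ_r, num_add, IHb. cbn. ring.
Qed.

Lemma num_le (a b : nat) : (a <= b)%nat -> (num a : M) ≼ num b.
Proof. intros H. replace b with ((b - a) + a)%nat by lia. rewrite num_add. apply le_add_l. Qed.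

Lemma pown_num (a k : nat) : pown (num a) k = (num (a ^ k) : M).
Proof. induction k; cbn; [ring|]. rewrite IHk, Nat.mul_comm, num_mul. ring. Qed.

Lemma le_num_is_num x (N : nat) : x ≼ num N -> exists k, x = num k.
Proof.
  induction N; cbn; intros H; [exists 0%nat; apply le_0_r; auto|].
  apply le_succ_r in H as [H|H]; auto. exists (S N); auto.
Qed.

Lemma def_exp_num (ex : M -> M -> M) : IsDefExp ex -> forall x (k : nat), ex x (num k) = pown x k.
Proof. intros [H0 [HS _]] x k. induction k; cbn; [apply H0|]. rewrite HS, IHk. auto. Qed.

(** * The exponential [e] of Exp' *)

Section ExpPrimeTheory.

Variable A : M -> Prop.
Variable e : M -> M -> M.
Hypothesis HE : ExpPrime A e.
Hypothesis HE5 : E5' A e.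
Hypothesis HE8 : E8 A e.

Lemma A_zero : A Z. Proof. apply HE. Qed.
Lemma A_one : A I. Proof. apply HE. Qed.
Lemma A_add x y : A x -> A y -> A (x ⊕ y). Proof. apply HE. Qed.

Lemma A_pred x : A x -> x <> Z -> exists z, A z /\ x = z ⊕ I.
Proof. destruct HE as [[_ [_ [_ [_ [_ [H _]]]]]] _]. apply H. Qed.

Lemma A_le_sub x y : A x -> A y -> x ≼ y -> exists z, A z /\ x ⊕ z = y.
Proof. destruct HE as [[_ [_ [_ [_ [_ [_ [_ [_ [_ [_ [H _]]]]]]]]]]] _]. intros; apply H; auto. Qed.

Lemma A_num (k : nat) : A (num k).
Proof. induction k; cbn; [apply A_zero|]. apply A_add; auto. apply A_one. Qed.

Lemma e_eq_1_iff x y : A y -> ((x = I \/ y = Z) <-> e x y = I). Proof. apply HE. Qed.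
Lemma e_neq0 x y : A y -> x <> Z -> e x y <> Z. Proof. apply HE. Qed.
Lemma e_1_r x : e x I = x. Proof. apply HE. Qed.
Lemma e_add_r x y z : A y -> A z -> e x (y ⊕ z) = e x y ⊗ e x z. Proof. apply HE. Qed.

Lemma e_num x (k : nat) : e x (num k) = pown x k.
Proof.
  induction k; cbn; [apply e_eq_1_iff; auto; apply A_zero|].
  rewrite e_add_r, IHk, e_1_r; auto; [apply A_num | apply A_one].
Qed.

Lemma e_eq_1 x n : A n -> n <> Z -> e x n = I -> x = I.
Proof. intros Hn Hn0 H. apply e_eq_1_iff in H as [|]; auto. contradiction. Qed.

Lemma e_1_l n : A n -> e I n = I.
Proof. intros Hn. apply e_eq_1_iff; auto. Qed.

Lemma dvd_e x n : A n -> n <> Z -> x ∣ e x n.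
Proof.
  intros Hn Hn0. destruct (A_pred n Hn Hn0) as [m [Hm ->]].
  rewrite e_add_r, e_1_r; auto; [apply dvd_factor_r | apply A_one].
Qed.

Lemma e_mul_l x y n : A n -> e (x ⊗ y) n = e x n ⊗ e y n.
Proof. intros; apply HE5; auto. Qed.

Lemma e_dvd_mono d x n : A n -> d ∣ x -> e d n ∣ e x n.
Proof. intros Hn [k ->]. rewrite e_mul_l; auto. apply dvd_factor_l. Qed.

Lemma e_coprime x y n : A n -> scoprime x y -> scoprime (e x n) (e y n).
Proof. intros; apply HE8; auto. Qed.

(* (e8) with exponents [1] and [n]: a prime not dividing [x] is coprime to [e x n]. *)
Lemma prime_dvd_e p x n : A n -> sprime p -> p ∣ e x n -> p ∣ x.
Proof.
  intros Hn Hp H. apply NNPP. intros Hpx.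
  apply (prime_neq1 p Hp), (HE8 p x I n A_one Hn (prime_coprime p x Hp Hpx)).
  - rewrite e_1_r. apply dvd_refl.
  - exact H.
Qed.

Lemma e_dvd_cancel d z n : A n -> n <> Z -> d <> Z -> e d n ∣ e z n -> d ∣ z.
Proof.
  intros Hn Hn0 Hd H. destruct (gcd_decomposition d z Hd) as [g [a [b [-> [-> Hab]]]]].
  rewrite !e_mul_l in H; auto.
  apply dvd_mul_cancel_l in H; [|apply e_neq0; auto; intros ->; apply Hd; ring].
  assert (Ha : e a n = I) by (apply (e_coprime a b n Hn Hab); auto; apply dvd_refl).
  apply e_eq_1 in Ha; auto. subst a. exists b. ring.
Qed.

Lemma coprime_third u v w n : A n -> n <> Z -> scoprime u v -> e u n ⊕ e v n = e w n ->
  scoprime u w.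
Proof.
  intros Hn Hn0 Huv E h H1 H2.
  assert (Hhv : scoprime h v) by (intros g G1 G2; apply Huv; auto; apply (dvd_trans g h); auto).
  assert (Hev : e h n ∣ e v n).
  { apply (dvd_add_cancel_l _ (e u n)); rewrite ?E; apply e_dvd_mono; auto. }
  apply (e_eq_1 h n); auto. apply (e_coprime h v n Hn Hhv); auto. apply dvd_refl.
Qed.

(* Dividing out [gcd x y] (which then divides [z] by [e_dvd_cancel]) yields a pairwise
   coprime solution. *)
Lemma coprime_solution x y z n : A n -> n <> Z -> x <> Z -> y <> Z -> z <> Z ->
  e x n ⊕ e y n = e z n ->
  exists x1 y1 z1, x1 <> Z /\ y1 <> Z /\ z1 <> Z /\
    scoprime x1 y1 /\ scoprime x1 z1 /\ scoprime y1 z1 /\ e x1 n ⊕ e y1 n = e z1 n.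
Proof.
  intros Hn Hn0 Hx Hy Hz E. destruct (gcd_decomposition x y Hx) as [g [x1 [y1 [-> [-> Hc]]]]].
  assert (Hg : g <> Z) by (intros ->; apply Hx; ring).
  assert (Heg : e g n <> Z) by (apply e_neq0; auto).
  assert (Hgz : g ∣ z).
  { apply (e_dvd_cancel g z n); auto. rewrite <- E, !e_mul_l; auto.
    exists (e x1 n ⊕ e y1 n). ring. }
  destruct Hgz as [z1 ->]. rewrite !e_mul_l in E; auto.
  assert (E1 : e x1 n ⊕ e y1 n = e z1 n).
  { apply (mul_cancel_r _ _ (e g n)); auto. rewrite !(mul_comm _ (e g n)), <- E. ring. }
  exists x1, y1, z1.
  split; [intros ->; apply Hx; ring|]. split; [intros ->; apply Hy; ring|].
  split; [intros ->; apply Hz; ring|]. split; [exact Hc|]. split.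
  - apply (coprime_third x1 y1 z1 n); auto.
  - split; auto. apply (coprime_third y1 x1 z1 n); auto.
    + apply coprime_sym; auto.
    + rewrite add_comm; auto.
Qed.

End ExpPrimeTheory.

(** * Radicals *)

Definition rad_candidate (P r : M) :=
  r <> Z /\ r ∣ P /\ forall p, sprime p -> p ∣ P -> p ∣ r.

(* If [q^2 ∣ r] for a prime [q], then [r / q] is a smaller candidate. *)
Lemma least_rad_candidate_squarefree P r : rad_candidate P r ->
  (forall r', rad_candidate P r' -> r ≼ r') -> ssquarefree r.
Proof.
  intros [Hr0 [HrP Hrp]] Hmin d Hdd. apply NNPP. intros Hd1.
  destruct (prime_divisor_exists d (dvd_neq0 _ _ (dvd_trans _ _ _ (dvd_factor_l d d) Hdd) Hr0) Hd1)
    as [q [Hq [d1 ->]]].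
  destruct Hdd as [k Hk].
  set (r' := q ⊗ d1 ⊗ d1 ⊗ k).
  assert (Er : r = q ⊗ r') by (rewrite Hk; unfold r'; ring).
  assert (Hr'0 : r' <> Z) by (intros E; apply Hr0; rewrite Er, E; ring).
  apply (lt_not_le r' r).
  - rewrite Er, <- (mul_1_l r') at 1. rewrite !(mul_comm _ r'). apply mul_lt_mono_l; auto. apply Hq.
  - apply Hmin. split; [exact Hr'0|split].
    + apply (dvd_trans r' r); auto. rewrite Er. apply dvd_factor_r.
    + intros p Hp HpP. pose proof (Hrp p Hp HpP) as H. rewrite Er in H.
      destruct (prime_dvd_mul _ _ _ Hp H) as [H'|H']; auto.
      destruct (proj2 Hq p H') as [->| ->]; [exfalso; apply (prime_neq1 _ Hp); auto|].
      exists (d1 ⊗ d1 ⊗ k). unfold r'. ring.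
Qed.

Lemma rad_exists_le P w : P <> Z -> rad_candidate P w -> exists r, IsRad P r /\ r ≼ w.
Proof.
  intros HP Hw.
  destruct (least_element
    (Fand (Fnot (Feq (Tvar 0) Tzero)) (Fand (fdvd (Tvar 0) (Tvar 1) 2)
       (fall_le 3 (Tvar 1) (Fimp (Fand (Fle (Tadd Tone Tone) (Tvar 3))
                                      (fall_le 5 (Tvar 3) (Fimp (fdvd (Tvar 5) (Tvar 3) 4)
                                         (For (Feq (Tvar 5) Tone) (Feq (Tvar 5) (Tvar 3))))))
                                (Fimp (fdvd (Tvar 3) (Tvar 1) 4) (fdvd (Tvar 3) (Tvar 0) 4))))))
    (fun _ : nat => P) (rad_candidate P)) as [r [Hr Hmin]].
  - prove_delta0.
  - intros r.
    change (r <> Z /\ (dvd_b r P /\ forall p, p ≼ P -> prime_b p -> dvd_b p P -> dvd_b p r)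
            <-> rad_candidate P r).
    split; intros [H1 [H2 H3]]; (split; [exact H1|split]);
      try (apply dvd_b_iff; auto).
    + intros p Hp HpP. apply dvd_b_iff; auto.
      apply H3; [apply dvd_le | apply prime_b_iff | apply dvd_b_iff]; auto.
    + intros p _ Hp HpP. apply dvd_b_iff; auto.
      apply H3; [apply prime_b_iff | apply dvd_b_iff]; auto.
  - exists w. exact Hw.
  - exists r. split; [|apply Hmin, Hw]. destruct Hr as [Hr0 [HrP Hrp]].
    split; [exact HrP|split; [|exact Hrp]].
    apply (least_rad_candidate_squarefree P); auto. split; auto.
Qed.

(** * Fermat's Last Theorem for [e] *)

Implicit Types (A : M -> Prop) (e : M -> M -> M).

Lemma two_le w : w <> Z -> w <> I -> num 2 ≼ w.
Proof. intros H0 H1. cbn. rewrite add_0_l. apply lt_succ_le, one_lt; auto. Qed.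

Lemma flt_e_small_exponent A e (N : nat) : ExpPrime A e -> FLT_exp dexp ->
  forall x y z n, x <> Z -> y <> Z -> z <> Z -> num 2 ≺ n -> n ≼ num N ->
  e x n ⊕ e y n <> e z n.
Proof.
  intros HE Hflt x y z n Hx Hy Hz H2n HnN E. destruct (le_num_is_num n N HnN) as [k ->].
  apply Hflt. exists x, y, z, (num k). do 4 (split; auto).
  rewrite !(def_exp_num dexp dexp_is_def_exp), <- !(e_num A e HE); auto.
Qed.

Lemma pown_le_e A e (N : nat) u n : ExpPrime A e -> A n -> num N ≼ n -> u <> Z ->
  pown u N ≼ e u n.
Proof.
  intros HE An HnN Hu. destruct (A_le_sub A e HE (num N) n (A_num A e HE N) An HnN) as [k [Ak <-]].
  rewrite (e_add_r A e HE), (e_num A e HE); auto; [|apply (A_num A e HE)].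
  apply le_mul_r, (e_neq0 A e HE); auto.
Qed.

Lemma rad_e_le_base A e x y z n : ExpPrime A e -> E8 A e -> A n -> n <> Z ->
  x <> Z -> y <> Z -> z <> Z ->
  exists r, IsRad (e x n ⊗ e y n ⊗ e z n) r /\ r ≼ x ⊗ y ⊗ z.
Proof.
  intros HE HE8 An Hn0 Hx Hy Hz. apply rad_exists_le.
  - repeat apply mul_neq0; apply (e_neq0 A e HE); auto.
  - split; [repeat apply mul_neq0; auto|split].
    + destruct (dvd_e A e HE x n An Hn0) as [k1 ->], (dvd_e A e HE y n An Hn0) as [k2 ->],
        (dvd_e A e HE z n An Hn0) as [k3 ->].
      exists (k1 ⊗ k2 ⊗ k3). ring.
    + intros p Hp H. destruct (prime_dvd_mul _ _ _ Hp H) as [H'|H'].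
      * destruct (prime_dvd_mul _ _ _ Hp H') as [H''|H''].
        -- apply dvd_mul_r, dvd_mul_r, (prime_dvd_e A e HE HE8 p x n); auto.
        -- apply dvd_mul_r, dvd_mul_l, (prime_dvd_e A e HE HE8 p y n); auto.
      * apply dvd_mul_l, (prime_dvd_e A e HE HE8 p z n); auto.
Qed.

(* [c^(3q) < (K^q w^(q+p))^3 ≤ w^(3Kq + 3(q+p)) ≤ w^(Nq)], using [K < 2^K ≤ w^K]. *)
Lemma abc_power_bound (K p q : nat) c r w : (0 < q)%nat -> num 2 ≼ w -> r ≼ w ->
  pown c q ≺ pown (num K) q ⊗ pown r (q + p) ->
  pown (pown c q) 3 ≺ pown w ((3 * K + 3 + 3 * p) * q).
Proof.
  intros Hq Hw2 Hrw Habc.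
  assert (Hw1 : I ≼ w).
  { apply neq0_ge1. intros ->. apply le_0_r in Hw2. exact (succ_neq0 _ Hw2). }
  set (T := pown (num K) q ⊗ pown w (q + p)).
  assert (HcT : pown c q ≺ T).
  { eapply lt_le_trans; [exact Habc|].
    apply mul_le_mono; [apply le_refl | apply pown_le_mono_l; auto]. }
  apply (lt_le_trans _ (pown T 3)); [apply pown_lt_mono_l, HcT|].
  unfold T. rewrite pown_mul_base, <- !pown_mul.
  apply (le_trans _ (pown w (K * (q * 3)) ⊗ pown w ((q + p) * 3))).
  - apply mul_le_mono; [|apply le_refl]. rewrite (pown_mul w K (q * 3)). apply pown_le_mono_l.
    apply (le_trans _ (pown (num 2) K)); [|apply pown_le_mono_l; auto].
    rewrite pown_num. apply num_le, Nat.lt_le_incl, Nat.pow_gt_lin_r; lia.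
  - rewrite <- pown_add. apply pown_le_mono_r; auto. nia.
Qed.

Lemma abc_excludes_large_exponent A e (K p q : nat) : (0 < q)%nat -> ExpPrime A e -> E8 A e ->
  ABC_in dexp K p q ->
  forall x y z n, A n -> num (3 * K + 3 + 3 * p) ≼ n -> x <> Z -> y <> Z -> z <> Z ->
  scoprime x y -> scoprime x z -> scoprime y z -> e x n ⊕ e y n <> e z n.
Proof.
  intros Hq HE HE8 Habc x y z n An HnN Hx Hy Hz Cxy Cxz Cyz E.
  set (N := (3 * K + 3 + 3 * p)%nat) in *.
  assert (Hn0 : n <> Z).
  { intros ->. apply le_0_r in HnN. replace N with (S (3 * K + 2 + 3 * p)) in HnN by lia.
    exact (succ_neq0 _ HnN). }
  set (a := e x n) in *. set (b := e y n) in *. set (c := e z n) in *. set (w := x ⊗ y ⊗ z).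
  assert (Hw2 : num 2 ≼ w).
  { apply two_le; [repeat apply mul_neq0; auto|]. intros Hw1.
    assert (x = I) by (apply dvd_1_r; rewrite <- Hw1; exists (y ⊗ z); unfold w; ring).
    assert (y = I) by (apply dvd_1_r; rewrite <- Hw1; exists (x ⊗ z); unfold w; ring).
    assert (z = I) by (apply dvd_1_r; rewrite <- Hw1; exists (x ⊗ y); unfold w; ring).
    subst x y z. unfold a, b, c in E. rewrite !(e_1_l A e HE) in E; auto.
    apply add_eq_self in E. apply one_neq0; auto. }
  assert (HwP : pown w N ≼ a ⊗ b ⊗ c).
  { unfold w. rewrite !pown_mul_base. repeat apply mul_le_mono; apply (pown_le_e A); auto. }
  assert (HPc : a ⊗ b ⊗ c ≼ pown c 3).
  { cbn. rewrite mul_1_l. apply mul_le_mono; [apply mul_le_mono|apply le_refl]; rewrite <- E.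
    - apply le_add_r.
    - apply le_add_l. }
  destruct (rad_e_le_base A e x y z n HE HE8 An Hn0 Hx Hy Hz) as [r [Hr Hrw]].
  pose proof (Habc a b c (e_neq0 A e HE x n An Hx) (e_neq0 A e HE y n An Hy)
    (e_coprime A e HE8 x y n An Cxy) (e_coprime A e HE8 x z n An Cxz)
    (e_coprime A e HE8 y z n An Cyz) E r Hr) as Hac.
  rewrite !(def_exp_num dexp dexp_is_def_exp) in Hac.
  apply (lt_not_le _ _ (abc_power_bound K p q c r w Hq Hw2 Hrw Hac)).
  fold N. rewrite (pown_mul w N q), <- (pown_mul c q 3).
  replace (q * 3)%nat with (3 * q)%nat by lia. rewrite (pown_mul c 3 q). apply pown_le_mono_l.
  eapply le_trans; [exact HwP|exact HPc].
Qed.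

Lemma flt_e_of_abc_flt A e (K p q : nat) : (0 < q)%nat -> ExpPrime A e -> E5' A e -> E8 A e ->
  ABC_in dexp K p q -> FLT_exp dexp -> FLT_e A e.
Proof.
  intros Hq HE HE5 HE8 Habc Hflt [x [y [z [n [Hx [Hy [Hz [An [H2n E]]]]]]]]].
  assert (Hn0 : n <> Z) by (intros ->; apply (lt_not_le _ _ H2n), le_0_l).
  destruct (coprime_solution A e HE HE5 HE8 x y z n An Hn0 Hx Hy Hz E)
    as [x1 [y1 [z1 [Hx1 [Hy1 [Hz1 [Cxy [Cxz [Cyz E1]]]]]]]]].
  destruct (le_total n (num (3 * K + 3 + 3 * p))) as [Hle|Hle].
  - exact (flt_e_small_exponent A e _ HE Hflt x1 y1 z1 n Hx1 Hy1 Hz1 H2n Hle E1).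
  - exact (abc_excludes_large_exponent A e K p q Hq HE HE8 Habc x1 y1 z1 n An Hle
             Hx1 Hy1 Hz1 Cxy Cxz Cyz E1).
Qed.

End Model.

Theorem theorem6p1 (T : theory) (K p q : nat) (hp : 0 < p) (hq : 0 < q) :
  (forall M : LStr, ModelOf T M -> ModelISigma1 M) ->
  (forall M : LStr, ModelOf T M ->
     forall ex : M -> M -> M, IsDefExp ex -> ABC_in ex K p q) ->
  (forall M : LStr, ModelOf T M ->
     forall ex : M -> M -> M, IsDefExp ex -> FLT_exp ex) ->
  forall M : LStr, ModelOf T M ->
  forall (A : M -> Prop) (e : M -> M -> M),
    ExpPrime A e -> E5' A e -> E8 A e -> FLT_e A e.
Proof.
  (* [hp] is unused: the argument works for every [ε = p / q >= 0]. *)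
  intros HT Habc Hflt M HM A e HE HE5 HE8.
  destruct (HT M HM) as [HB HI].
  apply (flt_e_of_abc_flt M HB HI A e K p q hq HE HE5 HE8).
  - apply Habc, dexp_is_def_exp; auto.
  - apply Hflt, dexp_is_def_exp; auto.
Qed.
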